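(* Let $\mathbb{X}$ be a real reflexive Kadets-Klee Banach space and $\mathbb{Y}$ a real normed linear space, and let $T\in\mathbb{K}(\mathbb{X},\mathbb{Y})$. Then $T$ is a smooth point of $\mathbb{B}(\mathbb{X},\mathbb{Y})$ if and only if $T$ is a smooth point of $\mathbb{K}(\mathbb{X},\mathbb{Y})$.
   Context: $\mathbb{B}(\mathbb{X},\mathbb{Y})$ and its subspace $\mathbb{K}(\mathbb{X},\mathbb{Y})$ of compact operators carry the operator norm. A nonzero element $x$ of a normed space $\mathbb{Z}$ is smooth if there is a unique $f\in\mathbb{Z}^*$ with $\|f\|=1$ and $f(x)=\|x\|$. A normed space $\mathbb{X}$ is Kadets-Klee if whenever $x_n\to x$ weakly and $\|x_n\|\to\|x\|$, then $\|x_n-x\|\to0$. *)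

From Stdlib Require Import Reals ClassicalEpsilon.
Open Scope R_scope.
Set Implicit Arguments.

Record NormedSpace := {
  carrier :> Type;
  zero : carrier;
  add : carrier -> carrier -> carrier;
  opp : carrier -> carrier;
  scal : R -> carrier -> carrier;
  norm : carrier -> R;
  add_assoc : forall x y z, add x (add y z) = add (add x y) z;
  add_comm : forall x y, add x y = add y x;
  add_zero : forall x, add zero x = x;
  add_opp : forall x, add x (opp x) = zero;
  scal_one : forall x, scal 1 x = x;
  scal_assoc : forall a b x, scal a (scal b x) = scal (a * b) x;
  scal_distr_l : forall a x y, scal a (add x y) = add (scal a x) (scal a y);
  scal_distr_r : forall a b x, scal (a + b) x = add (scal a x) (scal b x);
  norm_eq_zero : forall x, norm x = 0 -> x = zero;
  norm_scal : forall a x, norm (scal a x) = Rabs a * norm x;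
  norm_triangle : forall x y, norm (add x y) <= norm x + norm y
}.
Arguments zero {n}.
Arguments add {n}.
Arguments opp {n}.
Arguments scal {n}.
Arguments norm {n}.

Definition sub {X : NormedSpace} (x y : X) : X := add x (opp y).

(** Supremum of a set of reals (meaningful when the set is nonempty and bounded). *)
Definition sup_R (E : R -> Prop) : R := epsilon (inhabits 0) (fun m => is_lub E m).

Definition banach (X : NormedSpace) : Prop :=
  forall u : nat -> X,
    (forall eps, eps > 0 -> exists N, forall n m, (n >= N)%nat -> (m >= N)%nat ->
        norm (sub (u n) (u m)) < eps) ->
    exists x : X, Un_cv (fun n => norm (sub (u n) x)) 0.

Definition linear_map {X Y : NormedSpace} (T : X -> Y) : Prop :=
  (forall x y, T (add x y) = add (T x) (T y)) /\ (forall a x, T (scal a x) = scal a (T x)).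

Definition bounded_linear {X Y : NormedSpace} (T : X -> Y) : Prop :=
  linear_map T /\ exists C, forall x, norm (T x) <= C * norm x.

Definition opnorm {X Y : NormedSpace} (T : X -> Y) : R :=
  sup_R (fun t => exists x : X, norm x <= 1 /\ t = norm (T x)).

Definition linear_functional {X : NormedSpace} (f : X -> R) : Prop :=
  (forall x y, f (add x y) = f x + f y) /\ (forall a x, f (scal a x) = a * f x).

Definition dual_elt {X : NormedSpace} (f : X -> R) : Prop :=
  linear_functional f /\ exists C, forall x, Rabs (f x) <= C * norm x.

Definition dual_norm {X : NormedSpace} (f : X -> R) : R :=
  sup_R (fun t => exists x : X, norm x <= 1 /\ t = Rabs (f x)).

(** Reflexivity: the canonical embedding X -> X^** is onto. *)
Definition reflexive (X : NormedSpace) : Prop :=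
  forall phi : (X -> R) -> R,
    (forall f g, dual_elt f -> dual_elt g -> phi (fun x => f x + g x) = phi f + phi g) ->
    (forall a f, dual_elt f -> phi (fun x => a * f x) = a * phi f) ->
    (exists C, forall f, dual_elt f -> Rabs (phi f) <= C * dual_norm f) ->
    exists x : X, forall f, dual_elt f -> phi f = f x.

Definition weak_cv {X : NormedSpace} (u : nat -> X) (x : X) : Prop :=
  forall f, dual_elt f -> Un_cv (fun n => f (u n)) (f x).

Definition kadets_klee (X : NormedSpace) : Prop :=
  forall (u : nat -> X) (x : X),
    weak_cv u x -> Un_cv (fun n => norm (u n)) (norm x) ->
    Un_cv (fun n => norm (sub (u n) x)) 0.

(** Compact operators: bounded linear maps sending the closed unit ball to a
    relatively compact set (sequential characterisation in the metric space Y). *)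
Definition compact_op {X Y : NormedSpace} (T : X -> Y) : Prop :=
  bounded_linear T /\
  forall u : nat -> X, (forall n, norm (u n) <= 1) ->
    exists (phi : nat -> nat) (y : Y),
      (forall n, (phi n < phi (S n))%nat) /\
      Un_cv (fun n => norm (sub (T (u (phi n))) y)) 0.

Definition op_add {X Y : NormedSpace} (A B : X -> Y) : X -> Y := fun x => add (A x) (B x).
Definition op_scal {X Y : NormedSpace} (a : R) (A : X -> Y) : X -> Y := fun x => scal a (A x).

(** Functionals on [S]
    are represented by functions on (X -> Y), only their values on [S] matter. *)
Definition support_functional {X Y : NormedSpace} (S : (X -> Y) -> Prop)
    (T : X -> Y) (f : (X -> Y) -> R) : Prop :=
  (forall A B, S A -> S B -> f (op_add A B) = f A + f B) /\
  (forall a A, S A -> f (op_scal a A) = a * f A) /\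
  (exists C, forall A, S A -> Rabs (f A) <= C * opnorm A) /\
  sup_R (fun t => exists A, S A /\ opnorm A <= 1 /\ t = Rabs (f A)) = 1 /\
  f T = opnorm T.

Definition smooth_in {X Y : NormedSpace} (S : (X -> Y) -> Prop) (T : X -> Y) : Prop :=
  S T /\ (exists x, T x <> zero) /\
  (exists f, support_functional S T f) /\
  (forall f g, support_functional S T f -> support_functional S T g ->
     forall A, S A -> f A = g A).

(* For a compact T and S = B(X,Y) or K(X,Y), smoothness of T in S is equivalent to
   the same condition: T attains its norm on the unit ball only at +-x0 and T x0 is a
   smooth point of Y.

   For every norm-attaining x, evaluating at x a functional norming T x is
   a support functional of T in S; testing the uniqueness of support functionals on the
   rank-one operators h(.)y shows that the attaining points are +-x0 and that T x0 is
   smooth. A compact operator on a reflexive space does attain its norm: a Banach limit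
   of f(x_n), as f ranges over X^*, is represented by a point of X.

   A support functional F satisfies F(T + tA) = ||T|| + t F(A) <= ||T + tA||.
   A maximizing sequence for T + t_n A (t_n -> 0) is maximizing for T, so by compactness,
   uniqueness of +-x0 and the Kadets-Klee property a subsequence converges in norm to
   +-x0; this yields F(A) <= D(T x0; A x0), the one-sided derivative of the norm of Y.
   At the smooth point T x0 this derivative is odd in A, so F(A) = D(T x0; A x0) and F is
   unique. *)

From Stdlib Require Import Reals Lra Lia ClassicalEpsilon Classical FunctionalExtensionality PropExtensionality.
Open Scope R_scope.

Lemma sup_R_is_lub E : (exists m, is_lub E m) -> is_lub E (sup_R E).
Proof. intros H. unfold sup_R. apply epsilon_spec. exact H. Qed.

Lemma is_lub_unique E a b : is_lub E a -> is_lub E b -> a = b.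
Proof. intros [Ha1 Ha2] [Hb1 Hb2]. apply Rle_antisym; auto. Qed.

Lemma is_lub_exists E : (exists x, E x) -> (exists b, forall x, E x -> x <= b) ->
  exists m, is_lub E m.
Proof.
  intros Hn [b Hb]. destruct (completeness E) as [m Hm].
  - exists b. intros x Hx. auto.
  - exact Hn.
  - exists m; exact Hm.
Qed.

Definition is_glb (E : R -> Prop) (m : R) :=
  (forall x, E x -> m <= x) /\ (forall b, (forall x, E x -> b <= x) -> b <= m).

Definition inf_R (E : R -> Prop) : R := epsilon (inhabits 0) (is_glb E).

Lemma is_glb_exists E : (exists x, E x) -> (exists b, forall x, E x -> b <= x) ->
  exists m, is_glb E m.
Proof.
  intros [x0 Hx0] [b Hb].
  destruct (completeness (fun y => E (-y))) as [m [H1 H2]].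
  - exists (-b). intros y Hy. specialize (Hb _ Hy). lra.
  - exists (-x0). rewrite Ropp_involutive. exact Hx0.
  - exists (-m). split.
    + intros x Ex. assert (E (- - x)) by (rewrite Ropp_involutive; exact Ex).
      specialize (H1 _ H). lra.
    + intros c Hc. assert (m <= -c). { apply H2. intros y Hy. specialize (Hc _ Hy). lra. }
      lra.
Qed.

Lemma inf_R_is_glb E : (exists m, is_glb E m) -> is_glb E (inf_R E).
Proof. intros H. unfold inf_R. apply epsilon_spec. exact H. Qed.

Lemma Rdiv_le_of_le_mul a b s : 0 < s -> a <= b * s -> a / s <= b.
Proof. intros Hs H. unfold Rdiv. apply (Rmult_le_reg_r s); auto. rewrite Rmult_assoc, Rinv_l by lra. lra. Qed.

Lemma Rle_div_of_mul_le a b s : 0 < s -> b * s <= a -> b <= a / s.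
Proof. intros Hs H. unfold Rdiv. apply (Rmult_le_reg_r s); auto. rewrite Rmult_assoc, Rinv_l by lra. lra. Qed.

Lemma Rabs_le_inv a b : Rabs a <= b -> - b <= a <= b.
Proof. unfold Rabs. destruct (Rcase_abs a); intros; lra. Qed.

Lemma Rabs_m1 : Rabs (-1) = 1.
Proof. rewrite Rabs_left; lra. Qed.

Lemma seq_choice {A : Type} (P : nat -> A -> Prop) :
  (forall n, exists x, P n x) -> exists f, forall n, P n (f n).
Proof.
  intros H. exists (fun n => proj1_sig (constructive_indefinite_description _ (H n))).
  intros n. apply (proj2_sig (constructive_indefinite_description _ (H n))).
Qed.

Definition increasing (phi : nat -> nat) := forall k, (phi k < phi (S k))%nat.

Lemma extract_subsequence (P : nat -> nat -> Prop) :
  (forall k N, exists n, (n >= N)%nat /\ P k n) ->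
  exists phi, increasing phi /\ forall k, P k (phi k).
Proof.
  intros H.
  pose (g k N := proj1_sig (constructive_indefinite_description _ (H k N))).
  assert (Hg : forall k N, (g k N >= N)%nat /\ P k (g k N))
    by (intros k N; exact (proj2_sig (constructive_indefinite_description _ (H k N)))).
  pose (phi := fix f (k : nat) : nat :=
    match k with O => g O O | S k' => g (S k') (S (f k')) end).
  exists phi. split.
  - intros k. simpl. destruct (Hg (S k) (S (phi k))). lia.
  - intros k. destruct k; simpl; apply Hg.
Qed.

Lemma increasing_ge (phi : nat -> nat) : increasing phi -> forall n, (phi n >= n)%nat.
Proof. intros H n. induction n. lia. specialize (H n). lia. Qed.

Lemma increasing_lt (phi : nat -> nat) : increasing phi ->
  forall m n, (m < n)%nat -> (phi m < phi n)%nat.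
Proof.
  intros H m n Hmn. induction n. lia.
  destruct (Nat.eq_dec m n) as [->|]. apply H. specialize (H n). assert (m < n)%nat by lia. lia.
Qed.

Lemma increasing_comp (phi psi : nat -> nat) :
  increasing phi -> increasing psi -> increasing (fun k => phi (psi k)).
Proof. intros H1 H2 k. apply increasing_lt; auto. Qed.

Lemma Un_cv_subseq (u : nat -> R) l phi : increasing phi -> Un_cv u l ->
  Un_cv (fun k => u (phi k)) l.
Proof.
  intros Hp Hu eps He. destruct (Hu eps He) as [N HN]. exists N. intros n Hn.
  apply HN. pose proof (increasing_ge phi Hp n). lia.
Qed.

Lemma Un_cv_dominated (a b : nat -> R) l :
  (forall n, Rabs (a n - l) <= b n) -> Un_cv b 0 -> Un_cv a l.
Proof.
  intros H Hb eps He. destruct (Hb eps He) as [N HN]. exists N. intros n Hn.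
  specialize (HN n Hn). unfold R_dist in *. rewrite Rminus_0_r in HN.
  specialize (H n). pose proof (Rle_abs (b n)). lra.
Qed.

Lemma Un_cv_plus0 (a b : nat -> R) : Un_cv a 0 -> Un_cv b 0 -> Un_cv (fun n => a n + b n) 0.
Proof. intros Ha Hb. replace 0 with (0 + 0) by ring. apply CV_plus; auto. Qed.

Lemma Un_cv_scal0 (a : nat -> R) c : Un_cv a 0 -> Un_cv (fun n => c * a n) 0.
Proof.
  intros Ha. replace 0 with (c * 0) by ring. apply CV_mult; auto.
  intros eps He. exists O. intros. unfold R_dist. rewrite Rminus_diag, Rabs_R0. auto.
Qed.

Lemma Un_cv_dist0 u l : Un_cv u l -> Un_cv (fun n => Rabs (u n - l)) 0.
Proof.
  intros H eps He. destruct (H eps He) as [N HN]. exists N. intros n Hn. unfold R_dist in *.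
  rewrite Rminus_0_r, Rabs_Rabsolu. auto.
Qed.

Lemma not_Un_cv_frequently u l : ~ Un_cv u l ->
  exists eps, 0 < eps /\ forall N, exists n, (n >= N)%nat /\ eps <= Rabs (u n - l).
Proof.
  intros H. apply not_all_ex_not in H. destruct H as [eps H].
  apply imply_to_and in H. destruct H as [He H]. exists eps. split; [lra|].
  intros N. apply NNPP. intros Hn. apply H. exists N. intros n Hn'. unfold R_dist.
  apply Rnot_le_lt. intros Hl. apply Hn. eauto.
Qed.

Lemma frequently_above_or_below u l eps :
  (forall N, exists n, (n >= N)%nat /\ eps <= Rabs (u n - l)) ->
  (forall N, exists n, (n >= N)%nat /\ l + eps <= u n) \/
  (forall N, exists n, (n >= N)%nat /\ u n <= l - eps).
Proof.
  intros H. destruct (classic (forall N, exists n, (n >= N)%nat /\ l + eps <= u n)) as [H1|H1];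
    [left; auto|right].
  apply not_all_ex_not in H1. destruct H1 as [N0 H1]. intros N.
  destruct (H (max N N0)) as [n [Hn Hu]]. exists n. split. lia.
  assert (~ (l + eps <= u n)) by (intros Hc; apply H1; exists n; split; [lia|auto]).
  revert Hu. unfold Rabs. destruct (Rcase_abs (u n - l)); intros; lra.
Qed.

Definition inv_succ (n : nat) := / (INR n + 1).

Lemma inv_succ_pos n : 0 < inv_succ n.
Proof. unfold inv_succ. apply Rinv_0_lt_compat. pose proof (pos_INR n). lra. Qed.

Lemma inv_succ_le1 n : inv_succ n <= 1.
Proof. unfold inv_succ. rewrite <- Rinv_1. apply Rinv_le_contravar. lra. pose proof (pos_INR n). lra. Qed.

Lemma inv_succ_small eps : 0 < eps -> exists N, forall n, (n >= N)%nat -> inv_succ n < eps.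
Proof.
  intros He. destruct (archimed_cor1 eps He) as [N [HN HN0]]. exists N. intros n Hn.
  unfold inv_succ. eapply Rle_lt_trans; [|exact HN]. apply Rinv_le_contravar.
  apply lt_0_INR; lia. apply le_INR in Hn. lra.
Qed.

Lemma inv_succ_decr m n : (m <= n)%nat -> inv_succ n <= inv_succ m.
Proof.
  intros H. unfold inv_succ. apply Rinv_le_contravar. pose proof (pos_INR m); lra.
  apply le_INR in H; lra.
Qed.

Lemma inv_succ_cv : Un_cv inv_succ 0.
Proof.
  intros eps He. destruct (inv_succ_small eps He) as [N HN]. exists N. intros n Hn. unfold R_dist.
  rewrite Rminus_0_r, Rabs_pos_eq by (apply Rlt_le, inv_succ_pos). auto.
Qed.

(** * The Bourbaki–Witt fixed point theorem *)

Definition chain {E : Type} (le : E -> E -> Prop) (C : E -> Prop) :=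
  forall x y, C x -> C y -> le x y \/ le y x.

Section BourbakiWitt.
Variable E : Type.
Variable le : E -> E -> Prop.
Variable P : E -> Prop.
Variable b : E.
Variable f : E -> E.
Variable sup : (E -> Prop) -> E.
Hypothesis le_refl : forall x, P x -> le x x.
Hypothesis le_trans : forall x y z, le x y -> le y z -> le x z.
Hypothesis le_antisym : forall x y, P x -> P y -> le x y -> le y x -> x = y.
Hypothesis Pb : P b.
Hypothesis Pf : forall x, P x -> P (f x).
Hypothesis le_f : forall x, P x -> le x (f x).
Hypothesis Psup : forall C, (forall x, C x -> P x) -> chain le C -> (exists x, C x) -> P (sup C).
Hypothesis sup_ub : forall C, (forall x, C x -> P x) -> chain le C -> (exists x, C x) ->
  forall x, C x -> le x (sup C).
Hypothesis sup_least : forall C u, (forall x, C x -> P x) -> chain le C -> (exists x, C x) ->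
  P u -> (forall x, C x -> le x u) -> le (sup C) u.

Inductive tower : E -> Prop :=
| tower_base : tower b
| tower_f : forall x, tower x -> tower (f x)
| tower_sup : forall C, (forall x, C x -> tower x) -> chain le C -> (exists x, C x) ->
    tower (sup C).

Lemma tower_P x : tower x -> P x.
Proof. intros H. induction H; auto. Qed.

Lemma tower_ge_base x : tower x -> le b x.
Proof.
  intros H. induction H.
  - auto.
  - eapply le_trans. exact IHtower. apply le_f, tower_P; auto.
  - destruct H2 as [c Hc]. eapply le_trans. apply H0; exact Hc.
    apply sup_ub; auto. intros; apply tower_P; auto. exists c; auto.
Qed.

Definition extreme c := forall x, tower x -> le x c -> x <> c -> le (f x) c.

Lemma tower_split_extreme c : tower c -> extreme c ->
  forall x, tower x -> le x c \/ le (f c) x.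
Proof.
  intros Hc Hext x Hx. induction Hx.
  - left. apply tower_ge_base; auto.
  - destruct IHHx as [H | H].
    + destruct (classic (x = c)) as [->|Hne].
      * right. apply le_refl, Pf, tower_P; auto.
      * left. apply Hext; auto.
    + right. eapply le_trans. exact H. apply le_f, tower_P; auto.
  - destruct (classic (exists x, C x /\ le (f c) x)) as [[y [Hy1 Hy2]] | Hno].
    + right. eapply le_trans. exact Hy2. apply sup_ub; auto. intros; apply tower_P; auto.
    + left. apply sup_least; auto. intros; apply tower_P; auto. apply tower_P; auto.
      intros y Hy. destruct (H0 y Hy) as [H3|H3]; auto. exfalso; apply Hno; eauto.
Qed.

Lemma tower_extreme c : tower c -> extreme c.
Proof.
  intros Hc. induction Hc.
  - intros x Hx H1 H2. exfalso. apply H2. apply le_antisym; auto. apply tower_P; auto.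
    apply tower_ge_base; auto.
  - intros y Hy H1 H2. destruct (tower_split_extreme x Hc IHHc y Hy) as [H|H].
    + destruct (classic (y = x)) as [->|Hne].
      * apply le_refl, Pf, tower_P; auto.
      * eapply le_trans. apply IHHc; auto. apply le_f, tower_P; auto.
    + exfalso. apply H2. apply le_antisym; auto. apply tower_P; auto. apply Pf, tower_P; auto.
  - assert (HTs : tower (sup C)) by (apply tower_sup; auto).
    assert (HCP : forall x, C x -> P x) by (intros; apply tower_P; auto).
    intros x Hx H3 H4.
    destruct (classic (forall y, C y -> le (f y) x)) as [Hall | Hnot].
    + exfalso. apply H4. apply le_antisym; [apply tower_P; auto | apply tower_P; auto | exact H3 | ].
      apply (sup_least C x HCP H1 H2 (tower_P x Hx)).
      intros y Hy. eapply le_trans. apply le_f, HCP; auto. apply Hall; auto.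
    + apply not_all_ex_not in Hnot. destruct Hnot as [y Hy].
      apply imply_to_and in Hy. destruct Hy as [Hy1 Hy2].
      destruct (tower_split_extreme y (H y Hy1) (H0 y Hy1) x Hx) as [Hxy|Hxy]; [|contradiction].
      destruct (classic (x = y)) as [->|Hne].
      * destruct (tower_split_extreme y (H y Hy1) (H0 y Hy1) (sup C) HTs) as [Hs|Hs]; auto.
        exfalso. apply H4. apply le_antisym; [apply tower_P; auto | apply tower_P; auto | exact H3 | exact Hs].
      * eapply le_trans. apply (H0 y Hy1); auto. apply sup_ub; auto.
Qed.

Lemma tower_chain : chain le tower.
Proof.
  intros x y Hx Hy. destruct (tower_split_extreme y Hy (tower_extreme y Hy) x Hx) as [H|H]; auto.
  right. eapply le_trans. apply le_f, tower_P; auto. exact H.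
Qed.

Theorem bourbaki_witt : exists m, P m /\ le (f m) m.
Proof.
  assert (Hne : exists x, tower x) by (exists b; constructor).
  exists (sup tower). split.
  - apply Psup; auto. apply tower_P. apply tower_chain.
  - apply sup_ub; auto. apply tower_P. apply tower_chain.
    apply tower_f, tower_sup; auto. apply tower_chain.
Qed.
End BourbakiWitt.

(** * Real vector spaces and the Hahn–Banach theorem *)

Record VectorSpace := {
  vcarrier :> Type;
  v0 : vcarrier;
  vadd : vcarrier -> vcarrier -> vcarrier;
  vopp : vcarrier -> vcarrier;
  vscal : R -> vcarrier -> vcarrier;
  vadd_assoc : forall x y z, vadd x (vadd y z) = vadd (vadd x y) z;
  vadd_comm : forall x y, vadd x y = vadd y x;
  vadd_zero : forall x, vadd v0 x = x;
  vadd_opp : forall x, vadd x (vopp x) = v0;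
  vscal_one : forall x, vscal 1 x = x;
  vscal_assoc : forall a b x, vscal a (vscal b x) = vscal (a * b) x;
  vscal_distr_l : forall a x y, vscal a (vadd x y) = vadd (vscal a x) (vscal a y);
  vscal_distr_r : forall a b x, vscal (a + b) x = vadd (vscal a x) (vscal b x)
}.
Arguments v0 {v}.
Arguments vadd {v}.
Arguments vopp {v}.
Arguments vscal {v}.

Definition sublinear {V : VectorSpace} (p : V -> R) :=
  (forall x y, p (vadd x y) <= p x + p y) /\ (forall a x, 0 <= a -> p (vscal a x) = a * p x).

Definition subspace {V : VectorSpace} (D : V -> Prop) :=
  D v0 /\ (forall x y, D x -> D y -> D (vadd x y)) /\ (forall a x, D x -> D (vscal a x)).

Definition linear_on {V : VectorSpace} (D : V -> Prop) (g : V -> R) :=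
  (forall x y, D x -> D y -> g (vadd x y) = g x + g y) /\
  (forall a x, D x -> g (vscal a x) = a * g x).

Section VectorSpaceTheory.
Variable V : VectorSpace.

Lemma vadd0r (x : V) : vadd x v0 = x.
Proof. rewrite vadd_comm. apply vadd_zero. Qed.

Lemma vaddI (a b c : V) : vadd a b = vadd a c -> b = c.
Proof.
  intros H. rewrite <- (vadd_zero V b), <- (vadd_zero V c), <- (vadd_opp V a).
  rewrite (vadd_comm V a (vopp a)), <- !vadd_assoc, H. reflexivity.
Qed.

Lemma vscal0l (x : V) : vscal 0 x = v0.
Proof.
  apply (vaddI (vscal 0 x)). rewrite <- vscal_distr_r, Rplus_0_r, vadd0r. reflexivity.
Qed.

Lemma vscal0r a : vscal a (@v0 V) = v0.
Proof.
  apply (vaddI (vscal a v0)). rewrite <- vscal_distr_l, vadd_zero, vadd0r. reflexivity.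
Qed.

Lemma vaddACA (a b c d : V) : vadd (vadd a b) (vadd c d) = vadd (vadd a c) (vadd b d).
Proof.
  rewrite <- !vadd_assoc. f_equal. rewrite !vadd_assoc. f_equal. apply vadd_comm.
Qed.

Lemma vaddAC (a b c : V) : vadd (vadd a b) c = vadd (vadd a c) b.
Proof. rewrite <- !vadd_assoc. f_equal. apply vadd_comm. Qed.

Lemma vadd_scal_m1 (x : V) : vadd x (vscal (-1) x) = v0.
Proof.
  rewrite <- (vscal_one V x) at 1. rewrite <- vscal_distr_r.
  replace (1 + -1) with 0 by ring. apply vscal0l.
Qed.

Lemma vopp_scal_m1 (x : V) : vopp x = vscal (-1) x.
Proof. apply (vaddI x). rewrite vadd_opp, vadd_scal_m1. reflexivity. Qed.

Lemma subspace_decomp_unique (D : V -> Prop) v x x' a a' :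
  subspace D -> ~ D v -> D x -> D x' ->
  vadd x (vscal a v) = vadd x' (vscal a' v) -> x = x' /\ a = a'.
Proof.
  intros [D0 [Dadd Dscal]] Hv Hx Hx' H.
  assert (K : vadd x (vscal (-1) x') = vscal (a' + - a) v).
  { assert (H2 := f_equal (fun w => vadd w (vadd (vscal (-1) x') (vscal (-a) v))) H).
    simpl in H2. rewrite (vaddACA x), (vaddACA x'), <- !vscal_distr_r, vadd_scal_m1 in H2.
    replace (a + - a) with 0 in H2 by ring. rewrite vscal0l, vadd0r, vadd_zero in H2. exact H2. }
  assert (Ha : a = a').
  { destruct (Req_dec (a' + - a) 0) as [E|E]. lra. exfalso. apply Hv.
    replace v with (vscal (/ (a' + - a)) (vscal (a' + - a) v)).
    apply Dscal. rewrite <- K. apply Dadd; auto.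
    rewrite vscal_assoc, Rinv_l by exact E. apply vscal_one. }
  subst a'. split; auto. replace (a + - a) with 0 in K by ring. rewrite vscal0l in K.
  apply (vaddI (vscal (-1) x')). rewrite (vadd_comm _ _ x), K, vadd_comm, vadd_scal_m1.
  reflexivity.
Qed.

Lemma sublinear0 (p : V -> R) : sublinear p -> p v0 = 0.
Proof. intros [_ Hs]. rewrite <- (vscal0l v0) at 1. rewrite Hs by lra. ring. Qed.

End VectorSpaceTheory.

Section HahnBanach.
Variable V : VectorSpace.
Variable p : V -> R.
Hypothesis p_sublinear : sublinear p.

Definition pfun := ((V -> Prop) * (V -> R))%type.

(* The normalisation to [0] off [fst e] makes [pfun_le] antisymmetric. *)
Definition dominated (e : pfun) := subspace (fst e) /\ linear_on (fst e) (snd e) /\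
  (forall x, fst e x -> snd e x <= p x) /\ (forall x, ~ fst e x -> snd e x = 0).

Definition pfun_le (e1 e2 : pfun) := (forall x, fst e1 x -> fst e2 x) /\
  (forall x, fst e1 x -> snd e2 x = snd e1 x).

(* With [g := snd e], any value in [g y - p (y - v) <= c <= p (x + v) - g x] for all
   [x, y] in the domain extends [g] dominatedly to [v]; take the supremum of the left side. *)
Definition ext_const (e : pfun) (v : V) : R :=
  sup_R (fun r => exists y, fst e y /\ r = snd e y - p (vadd y (vscal (-1) v))).

Lemma ext_const_spec e v : dominated e ->
  (forall x, fst e x -> ext_const e v <= p (vadd x v) - snd e x) /\
  (forall y, fst e y -> snd e y - p (vadd y (vscal (-1) v)) <= ext_const e v).
Proof.
  intros [[D0 [Dadd Dscal]] [[Ladd Lscal] [Lp _]]]. destruct p_sublinear as [p_add _].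
  assert (Kq : forall x y, fst e x -> fst e y ->
     snd e y - p (vadd y (vscal (-1) v)) <= p (vadd x v) - snd e x).
  { intros x y Hx Hy.
    assert (E : vadd x y = vadd (vadd x v) (vadd y (vscal (-1) v)))
      by (rewrite vaddACA, vadd_scal_m1, vadd0r; reflexivity).
    assert (p (vadd x y) <= p (vadd x v) + p (vadd y (vscal (-1) v)))
      by (rewrite E at 1; apply p_add).
    assert (snd e (vadd x y) <= p (vadd x y)) by auto.
    rewrite Ladd in * by auto. lra. }
  assert (Hl : is_lub (fun r => exists y, fst e y /\ r = snd e y - p (vadd y (vscal (-1) v)))
                      (ext_const e v)).
  { apply sup_R_is_lub, is_lub_exists.
    - exists (snd e v0 - p (vadd v0 (vscal (-1) v))). exists v0; auto.
    - exists (p (vadd v0 v) - snd e v0). intros r [y [Hy ->]]. apply Kq; auto. }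
  destruct Hl as [Hub Hleast]. split.
  - intros x Hx. apply Hleast. intros r [y [Hy ->]]. apply Kq; auto.
  - intros y Hy. apply Hub. exists y; auto.
Qed.

Definition ext_dom (e : pfun) v : V -> Prop := fun w => exists x a, fst e x /\ w = vadd x (vscal a v).

Definition ext_fun (e : pfun) v : V -> R := fun w =>
  if excluded_middle_informative (ext_dom e v w) then
    epsilon (inhabits 0) (fun r => exists x a, fst e x /\ w = vadd x (vscal a v) /\
                                               r = snd e x + a * ext_const e v)
  else 0.

Lemma ext_fun_spec e v x a : dominated e -> ~ fst e v -> fst e x ->
  ext_fun e v (vadd x (vscal a v)) = snd e x + a * ext_const e v.
Proof.
  intros He Hv Hx. unfold ext_fun.
  destruct (excluded_middle_informative _) as [H|H]; [|exfalso; apply H; exists x, a; auto].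
  match goal with |- epsilon ?i ?P = _ =>
    assert (Hex : exists r, P r) by (exists (snd e x + a * ext_const e v); exists x, a; auto);
    destruct (epsilon_spec i P Hex) as (x1 & a1 & Hx1 & Heq & ->) end.
  destruct (subspace_decomp_unique V (fst e) v x x1 a a1) as [-> ->]; auto. apply He.
Qed.

Lemma ext_fun_le e v w : dominated e -> ~ fst e v -> ext_dom e v w -> ext_fun e v w <= p w.
Proof.
  intros He Hv (x & a & Hx & ->). pose proof He as [[_ [_ Dscal]] [[_ Lscal] [Lp _]]].
  destruct p_sublinear as [_ p_scal].
  destruct (ext_const_spec e v He) as [C1 C2]. rewrite ext_fun_spec by auto.
  destruct (Rtotal_order a 0) as [Hneg | [-> | Hpos]].
  - assert (E : vadd x (vscal a v) = vscal (- a) (vadd (vscal (/ - a) x) (vscal (-1) v))).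
    { rewrite vscal_distr_l, !vscal_assoc, Rinv_r by lra.
      rewrite vscal_one. do 3 f_equal. ring. }
    rewrite E, p_scal by lra.
    specialize (C2 (vscal (/ - a) x) (Dscal _ _ Hx)). rewrite Lscal in C2 by auto.
    replace (snd e x + a * ext_const e v) with (- a * (/ - a * snd e x - ext_const e v))
      by (field; lra).
    apply Rmult_le_compat_l; lra.
  - rewrite vscal0l, vadd0r, Rmult_0_l, Rplus_0_r. auto.
  - assert (E : vadd x (vscal a v) = vscal a (vadd (vscal (/ a) x) v)).
    { rewrite vscal_distr_l, !vscal_assoc, Rinv_r by lra. rewrite vscal_one. reflexivity. }
    rewrite E, p_scal by lra.
    specialize (C1 (vscal (/ a) x) (Dscal _ _ Hx)). rewrite Lscal in C1 by auto.
    replace (snd e x + a * ext_const e v) with (a * (/ a * snd e x + ext_const e v))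
      by (field; lra).
    apply Rmult_le_compat_l; lra.
Qed.

Lemma ext_dominated e v : dominated e -> ~ fst e v -> dominated (ext_dom e v, ext_fun e v).
Proof.
  intros He Hv. pose proof He as [[D0 [Dadd Dscal]] [[Ladd Lscal] _]].
  assert (Ssum : forall x1 x2 a1 a2, vadd (vadd x1 (vscal a1 v)) (vadd x2 (vscal a2 v))
                   = vadd (vadd x1 x2) (vscal (a1 + a2) v))
    by (intros; rewrite vaddACA, vscal_distr_r; reflexivity).
  assert (Sscal : forall b x a, vscal b (vadd x (vscal a v)) = vadd (vscal b x) (vscal (b * a) v))
    by (intros; rewrite vscal_distr_l, vscal_assoc; reflexivity).
  split; [|split; [|split]]; simpl.
  - split; [|split].
    + exists v0, 0. rewrite vscal0l, vadd0r. auto.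
    + intros w1 w2 (x1 & a1 & H1 & ->) (x2 & a2 & H2 & ->).
      exists (vadd x1 x2), (a1 + a2). auto.
    + intros b w (x & a & H1 & ->). exists (vscal b x), (b * a). auto.
  - split.
    + intros w1 w2 (x1 & a1 & H1 & ->) (x2 & a2 & H2 & ->).
      rewrite Ssum, !ext_fun_spec, Ladd by auto. ring.
    + intros b w (x & a & H1 & ->). rewrite Sscal, !ext_fun_spec, Lscal by auto. ring.
  - intros w Hw. apply ext_fun_le; auto.
  - intros w Hw. unfold ext_fun. destruct (excluded_middle_informative _); [contradiction | auto].
Qed.

Lemma ext_extends e v : dominated e -> ~ fst e v ->
  pfun_le e (ext_dom e v, ext_fun e v) /\ ext_dom e v v.
Proof.
  intros He Hv. pose proof He as [[D0 _] _].
  assert (Hx0 : forall x, vadd x (vscal 0 v) = x) by (intros; rewrite vscal0l, vadd0r; auto).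
  split; [split|]; simpl.
  - intros x Hx. exists x, 0. rewrite Hx0. auto.
  - intros x Hx. rewrite <- (Hx0 x) at 1. rewrite ext_fun_spec by auto. ring.
  - exists v0, 1. rewrite vscal_one, vadd_zero. auto.
Qed.

Definition ext_step (e : pfun) : pfun :=
  let v := epsilon (inhabits v0) (fun v => ~ fst e v) in
  if excluded_middle_informative (fst e v) then e else (ext_dom e v, ext_fun e v).

Definition chain_sup_dom (C : pfun -> Prop) : V -> Prop := fun w => exists e, C e /\ fst e w.

Definition chain_sup_fun (C : pfun -> Prop) : V -> R := fun w =>
  if excluded_middle_informative (chain_sup_dom C w) then
    epsilon (inhabits 0) (fun r => exists e, C e /\ fst e w /\ r = snd e w)
  else 0.

Definition chain_sup C : pfun := (chain_sup_dom C, chain_sup_fun C).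

Lemma chain_sup_fun_spec C e w : chain pfun_le C -> C e -> fst e w -> chain_sup_fun C w = snd e w.
Proof.
  intros Hc He Hw. unfold chain_sup_fun.
  destruct (excluded_middle_informative _) as [H|H]; [|exfalso; apply H; exists e; auto].
  match goal with |- epsilon ?i ?P = _ =>
    assert (Hex : exists r, P r) by (exists (snd e w); exists e; auto);
    destruct (epsilon_spec i P Hex) as (e1 & He1 & Hw1 & ->) end.
  destruct (Hc e e1 He He1) as [[_ L] | [_ L]]; auto. symmetry; auto.
Qed.

Lemma chain_common C e1 e2 w1 w2 : chain pfun_le C -> C e1 -> C e2 -> fst e1 w1 -> fst e2 w2 ->
  exists e, C e /\ fst e w1 /\ fst e w2.
Proof.
  intros Hc H1 H2 Hw1 Hw2. destruct (Hc e1 e2 H1 H2) as [[L _] | [L _]].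
  - exists e2; auto.
  - exists e1; auto.
Qed.

Lemma chain_sup_dominated C : (forall e, C e -> dominated e) -> chain pfun_le C ->
  (exists e, C e) -> dominated (chain_sup C).
Proof.
  intros HP Hc [e0 He0]. unfold chain_sup. split; [|split; [|split]]; simpl.
  - split; [|split].
    + exists e0. split; auto. apply (HP e0 He0).
    + intros w1 w2 (e1 & H1 & Hw1) (e2 & H2 & Hw2).
      destruct (chain_common C e1 e2 w1 w2 Hc H1 H2 Hw1 Hw2) as (e & He & A & B).
      exists e. split; auto. apply (HP e He); auto.
    + intros a w (e & He & Hw). exists e. split; auto. apply (HP e He); auto.
  - split.
    + intros w1 w2 (e1 & H1 & Hw1) (e2 & H2 & Hw2).
      destruct (chain_common C e1 e2 w1 w2 Hc H1 H2 Hw1 Hw2) as (e & He & A & B).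
      destruct (HP e He) as [[_ [Da _]] [[La _] _]].
      rewrite !(chain_sup_fun_spec C e) by auto. apply La; auto.
    + intros a w (e & He & Hw). destruct (HP e He) as [[_ [_ Ds]] [[_ Ls] _]].
      rewrite !(chain_sup_fun_spec C e) by auto. apply Ls; auto.
  - intros w (e & He & Hw). rewrite (chain_sup_fun_spec C e) by auto. apply (HP e He); auto.
  - intros w Hw. unfold chain_sup_fun.
    destruct (excluded_middle_informative _); [contradiction|auto].
Qed.

Lemma pfun_le_antisym e1 e2 : dominated e1 -> dominated e2 -> pfun_le e1 e2 -> pfun_le e2 e1 ->
  e1 = e2.
Proof.
  destruct e1 as [D1 g1], e2 as [D2 g2].
  intros [_ [_ [_ Z1]]] [_ [_ [_ Z2]]] [A1 B1] [A2 B2]. simpl in *.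
  assert (ED : D1 = D2).
  { apply functional_extensionality. intros w. apply propositional_extensionality. split; auto. }
  subst D2. f_equal. apply functional_extensionality. intros w.
  destruct (classic (D1 w)); [apply B2 | rewrite Z1, Z2]; auto.
Qed.

Lemma ext_step_dominated e : dominated e -> dominated (ext_step e) /\ pfun_le e (ext_step e).
Proof.
  intros He. unfold ext_step. destruct (excluded_middle_informative _).
  - split; [|split]; auto.
  - split; [apply ext_dominated | apply ext_extends]; auto.
Qed.

Lemma ext_step_fixpoint_total m : dominated m -> pfun_le (ext_step m) m -> forall w, fst m w.
Proof.
  intros Hm [L _] w. apply NNPP. intros Hw.
  assert (Hv : ~ fst m (epsilon (inhabits v0) (fun v => ~ fst m v)))
    by (apply (epsilon_spec (inhabits v0) (fun v => ~ fst m v)); exists w; auto).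
  unfold ext_step in L. destruct (excluded_middle_informative _); [contradiction|].
  apply Hv, L, (ext_extends m _ Hm Hv).
Qed.

Theorem hahn_banach : exists F : V -> R, (forall x y, F (vadd x y) = F x + F y) /\
  (forall a x, F (vscal a x) = a * F x) /\ (forall x, F x <= p x).
Proof.
  pose (b := ((fun w : V => w = v0), (fun _ : V => 0)) : pfun).
  destruct (bourbaki_witt pfun pfun_le dominated b ext_step chain_sup) as [m [Hm Hle]].
  - intros x _. split; auto.
  - intros x y z [A1 B1] [A2 B2]. split; auto. intros w Hw. rewrite B2; auto.
  - apply pfun_le_antisym.
  - split; [|split; [|split]]; simpl.
    + split; [auto|split].
      * intros x y -> ->. apply vadd_zero.
      * intros a x ->. apply vscal0r.
    + split; intros; simpl; ring.
    + intros x ->. rewrite (sublinear0 V p p_sublinear). lra.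
    + auto.
  - apply ext_step_dominated.
  - apply ext_step_dominated.
  - apply chain_sup_dominated.
  - intros C HP Hc Hne x Hx. split; simpl.
    + intros w Hw. exists x; auto.
    + intros w Hw. apply chain_sup_fun_spec; auto.
  - intros C u HP Hc Hne Hu Hub. split; simpl.
    + intros w (e & He & Hw). apply (Hub e He); auto.
    + intros w (e & He & Hw). rewrite (chain_sup_fun_spec C e) by auto. apply (Hub e He); auto.
  - pose proof (ext_step_fixpoint_total m Hm Hle) as Hall.
    destruct Hm as [_ [[La Ls] [Lp _]]].
    exists (snd m). split; [|split]; intros; auto.
Qed.
End HahnBanach.

(** * One-sided directional derivatives of a sublinear functional *)

Section DirectionalDerivative.
Variable V : VectorSpace.
Variable p : V -> R.
Hypothesis p_sublinear : sublinear p.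
Variable y : V.

Let p_add : forall x z, p (vadd x z) <= p x + p z := proj1 p_sublinear.
Let p_scal : forall a x, 0 <= a -> p (vscal a x) = a * p x := proj2 p_sublinear.

Definition dquot (w : V) (s : R) := (p (vadd y (vscal s w)) - p y) / s.

Definition dderiv (w : V) := inf_R (fun r => exists s, s > 0 /\ r = dquot w s).

Lemma dquot_lb w s : s > 0 -> - p (vscal (-1) w) <= dquot w s.
Proof.
  intros Hs. unfold dquot. apply Rle_div_of_mul_le; auto.
  assert (E : y = vadd (vadd y (vscal s w)) (vscal s (vscal (-1) w))).
  { rewrite vscal_assoc, <- vadd_assoc, <- vscal_distr_r. replace (s + s * -1) with 0 by ring.
    rewrite vscal0l, vadd0r. auto. }
  assert (H := p_add (vadd y (vscal s w)) (vscal s (vscal (-1) w))).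
  rewrite <- E, p_scal in H by lra. lra.
Qed.

(* Convexity of [s |-> p (y + s w)]. *)
Lemma dquot_incr w s s' : 0 < s -> s <= s' -> dquot w s <= dquot w s'.
Proof.
  intros Hs Hss. set (r := s / s').
  assert (Hr0 : 0 <= r) by (unfold r; apply Rlt_le, Rdiv_lt_0_compat; lra).
  assert (Hr1 : r <= 1) by (unfold r; apply Rdiv_le_of_le_mul; lra).
  assert (E : vadd y (vscal s w) = vadd (vscal r (vadd y (vscal s' w))) (vscal (1 - r) y)).
  { rewrite vscal_distr_l, vscal_assoc, vaddAC, <- vscal_distr_r.
    replace (r + (1 - r)) with 1 by ring. rewrite vscal_one. do 3 f_equal.
    unfold r. field. lra. }
  assert (H := p_add (vscal r (vadd y (vscal s' w))) (vscal (1 - r) y)).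
  rewrite <- E, !p_scal in H by lra.
  unfold dquot. apply Rdiv_le_of_le_mul; auto. unfold Rdiv.
  replace ((p (vadd y (vscal s' w)) - p y) * / s' * s) with (r * (p (vadd y (vscal s' w)) - p y))
    by (unfold r; field; lra).
  lra.
Qed.

Lemma dderiv_is_glb w : is_glb (fun r => exists s, s > 0 /\ r = dquot w s) (dderiv w).
Proof.
  apply inf_R_is_glb, is_glb_exists.
  - exists (dquot w 1). exists 1; split; auto; lra.
  - exists (- p (vscal (-1) w)). intros r [s [Hs ->]]. apply dquot_lb; auto.
Qed.

Lemma dderiv_le_dquot w s : s > 0 -> dderiv w <= dquot w s.
Proof. intros Hs. apply (proj1 (dderiv_is_glb w)). exists s; auto. Qed.

Lemma dderiv_ge w c : (forall s, s > 0 -> c <= dquot w s) -> c <= dderiv w.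
Proof. intros H. apply (proj2 (dderiv_is_glb w)). intros r [s [Hs ->]]. auto. Qed.

Lemma dderiv_approx w eps : eps > 0 -> exists s, s > 0 /\ dquot w s < dderiv w + eps.
Proof.
  intros He. apply NNPP. intros Hn.
  assert (dderiv w + eps <= dderiv w); [|lra].
  apply dderiv_ge. intros s Hs. apply Rnot_lt_le. intros Hl. apply Hn. eauto.
Qed.

Lemma dderiv_add w1 w2 : dderiv (vadd w1 w2) <= dderiv w1 + dderiv w2.
Proof.
  apply le_epsilon. intros eps He.
  destruct (dderiv_approx w1 (eps/2)) as [s1 [Hs1 Q1]]; [lra|].
  destruct (dderiv_approx w2 (eps/2)) as [s2 [Hs2 Q2]]; [lra|].
  set (s := Rmin s1 s2 / 2).
  assert (Hm : 0 < Rmin s1 s2) by (apply Rmin_glb_lt; lra).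
  assert (Hs : s > 0) by (unfold s; lra).
  assert (M1 : dquot w1 (2 * s) <= dquot w1 s1)
    by (apply dquot_incr; unfold s; pose proof (Rmin_l s1 s2); lra).
  assert (M2 : dquot w2 (2 * s) <= dquot w2 s2)
    by (apply dquot_incr; unfold s; pose proof (Rmin_r s1 s2); lra).
  assert (K : dquot (vadd w1 w2) s <= dquot w1 (2 * s) + dquot w2 (2 * s)).
  { set (y1 := vadd y (vscal (2 * s) w1)). set (y2 := vadd y (vscal (2 * s) w2)).
    assert (E : vadd y (vscal s (vadd w1 w2)) = vadd (vscal (/2) y1) (vscal (/2) y2)).
    { unfold y1, y2. rewrite !vscal_distr_l, !vscal_assoc, vaddACA, <- vscal_distr_r.
      replace (/2 + /2) with 1 by field. rewrite vscal_one.
      replace (/ 2 * (2 * s)) with s by field. auto. }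
    assert (H := p_add (vscal (/2) y1) (vscal (/2) y2)).
    rewrite <- E, !p_scal in H by lra.
    unfold dquot. fold y1 y2. apply Rdiv_le_of_le_mul; auto.
    replace (((p y1 - p y) / (2 * s) + (p y2 - p y) / (2 * s)) * s)
      with (/2 * (p y1 - p y) + /2 * (p y2 - p y)) by (field; lra).
    lra. }
  pose proof (dderiv_le_dquot (vadd w1 w2) s Hs). lra.
Qed.

Lemma dderiv_scal a w : 0 <= a -> dderiv (vscal a w) = a * dderiv w.
Proof.
  intros Ha. destruct (Req_dec a 0) as [->|Hna].
  - rewrite vscal0l, Rmult_0_l.
    assert (Q : forall s, s > 0 -> dquot v0 s = 0)
      by (intros s Hs; unfold dquot; rewrite vscal0r, vadd0r; unfold Rdiv; ring).
    apply Rle_antisym.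
    + rewrite <- (Q 1) by lra. apply dderiv_le_dquot; lra.
    + apply dderiv_ge. intros s Hs. rewrite Q; lra.
  - assert (Q : forall s, s > 0 -> dquot (vscal a w) s = a * dquot w (a * s)).
    { intros s Hs. unfold dquot. rewrite vscal_assoc, (Rmult_comm s a). field. lra. }
    apply Rle_antisym.
    + assert (dderiv (vscal a w) / a <= dderiv w).
      { apply dderiv_ge. intros s Hs. apply Rdiv_le_of_le_mul; [lra|].
        assert (Hsa : s / a > 0) by (apply Rdiv_lt_0_compat; lra).
        replace (dquot w s * a) with (dquot (vscal a w) (s / a)).
        - apply dderiv_le_dquot. exact Hsa.
        - rewrite Q by exact Hsa. replace (a * (s / a)) with s by (field; lra). ring. }
      apply (Rmult_le_compat_l a) in H; [|lra].
      replace (a * (dderiv (vscal a w) / a)) with (dderiv (vscal a w)) in H by (field; lra). lra.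
    + apply dderiv_ge. intros s Hs. rewrite Q by auto. apply Rmult_le_compat_l; [lra|].
      apply dderiv_le_dquot. apply Rmult_lt_0_compat; lra.
Qed.

Lemma dderiv_sublinear : sublinear dderiv.
Proof. split; [apply dderiv_add | apply dderiv_scal]. Qed.

Lemma dderiv_le w : dderiv w <= p w.
Proof.
  eapply Rle_trans. apply (dderiv_le_dquot w 1); lra. unfold dquot. rewrite vscal_one.
  pose proof (p_add y w). unfold Rdiv. rewrite Rinv_1. lra.
Qed.

Lemma dderiv_base : dderiv y = p y.
Proof.
  assert (Q : forall s, s > 0 -> dquot y s = p y).
  { intros s Hs. unfold dquot.
    replace (vadd y (vscal s y)) with (vscal (1 + s) y) by (rewrite vscal_distr_r, vscal_one; auto).
    rewrite p_scal by lra. field. lra. }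
  apply Rle_antisym.
  - rewrite <- (Q 1) by lra. apply dderiv_le_dquot; lra.
  - apply dderiv_ge. intros s Hs. rewrite Q; auto. lra.
Qed.

Lemma dderiv_opp_base : dderiv (vscal (-1) y) = - p y.
Proof.
  apply Rle_antisym.
  - replace (- p y) with (dquot (vscal (-1) y) (1/2)).
    + apply dderiv_le_dquot; lra.
    + unfold dquot. replace (vadd y (vscal (1/2) (vscal (-1) y))) with (vscal (1/2) y).
      * rewrite p_scal by lra. field.
      * rewrite vscal_assoc. rewrite <- (vscal_one V y) at 2. rewrite <- vscal_distr_r.
        f_equal. field.
  - apply dderiv_ge. intros s Hs. pose proof (dquot_lb (vscal (-1) y) s Hs) as H.
    rewrite vscal_assoc in H. replace (-1 * -1) with 1 in H by ring. rewrite vscal_one in H.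
    exact H.
Qed.

Lemma dominated_by_dderiv_tangent (F : V -> R) :
  (forall a x, F (vscal a x) = a * F x) -> (forall x, F x <= dderiv x) ->
  (forall x, F x <= p x) /\ F y = p y.
Proof.
  intros Fs Fle. split.
  - intros x. eapply Rle_trans; [apply Fle | apply dderiv_le].
  - apply Rle_antisym.
    + rewrite <- dderiv_base. apply Fle.
    + pose proof (Fle (vscal (-1) y)) as H. rewrite Fs, dderiv_opp_base in H. lra.
Qed.
End DirectionalDerivative.

Theorem hahn_banach_tangent (V : VectorSpace) (p : V -> R) (y : V) : sublinear p ->
  exists F : V -> R, (forall x z, F (vadd x z) = F x + F z) /\
  (forall a x, F (vscal a x) = a * F x) /\ (forall x, F x <= p x) /\ F y = p y.
Proof.
  intros Hp.
  destruct (hahn_banach V (dderiv V p y) (dderiv_sublinear V p Hp y)) as [F [Fa [Fs Fle]]].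
  destruct (dominated_by_dderiv_tangent V p Hp y F Fs Fle).
  exists F. auto.
Qed.

(** * Banach limits *)

Definition bounded_seq (u : nat -> R) := exists B, forall n, Rabs (u n) <= B.

Lemma bounded_seq_add u v : bounded_seq u -> bounded_seq v -> bounded_seq (fun n => u n + v n).
Proof.
  intros [B1 H1] [B2 H2]. exists (B1 + B2). intros n.
  eapply Rle_trans. apply Rabs_triang. specialize (H1 n). specialize (H2 n). lra.
Qed.

Lemma bounded_seq_scal a u : bounded_seq u -> bounded_seq (fun n => a * u n).
Proof.
  intros [B H]. exists (Rabs a * B). intros n. rewrite Rabs_mult.
  apply Rmult_le_compat_l. apply Rabs_pos. auto.
Qed.

Lemma bounded_seq_opp u : bounded_seq u -> bounded_seq (fun n => - u n).
Proof. intros [B H]. exists B. intros n. rewrite Rabs_Ropp. auto. Qed.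

Lemma bounded_seq_0 : bounded_seq (fun _ => 0).
Proof. exists 0. intros. rewrite Rabs_R0. lra. Qed.

Definition bseq := {u : nat -> R | bounded_seq u}.

Lemma bseq_eq (a b : bseq) : proj1_sig a = proj1_sig b -> a = b.
Proof. destruct a, b. simpl. intros ->. f_equal. apply proof_irrelevance. Qed.

Ltac bseq_ring := intros; apply bseq_eq; simpl; apply functional_extensionality; intros; ring.

Definition bseq_space : VectorSpace := {|
  vcarrier := bseq;
  v0 := exist _ _ bounded_seq_0;
  vadd a b := exist _ _ (bounded_seq_add _ _ (proj2_sig a) (proj2_sig b));
  vopp a := exist _ _ (bounded_seq_opp _ (proj2_sig a));
  vscal r a := exist _ _ (bounded_seq_scal r _ (proj2_sig a));
  vadd_assoc := ltac:(bseq_ring); vadd_comm := ltac:(bseq_ring);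
  vadd_zero := ltac:(bseq_ring); vadd_opp := ltac:(bseq_ring);
  vscal_one := ltac:(bseq_ring); vscal_assoc := ltac:(bseq_ring);
  vscal_distr_l := ltac:(bseq_ring); vscal_distr_r := ltac:(bseq_ring) |}.

Definition eventually_le (u : nat -> R) (M : R) := exists N, forall n, (n >= N)%nat -> u n <= M.

Definition limsup (a : bseq) := inf_R (eventually_le (proj1_sig a)).

Lemma limsup_is_glb a : is_glb (eventually_le (proj1_sig a)) (limsup a).
Proof.
  apply inf_R_is_glb. destruct a as [u [B HB]]. simpl. apply is_glb_exists.
  - exists B. exists O. intros n _. specialize (HB n). apply Rabs_le_inv in HB. lra.
  - exists (- B). intros M [N HN]. specialize (HN N (le_n N)). specialize (HB N).
    apply Rabs_le_inv in HB. lra.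
Qed.

Lemma limsup_le a M : eventually_le (proj1_sig a) M -> limsup a <= M.
Proof. intros H. apply (proj1 (limsup_is_glb a)). auto. Qed.

Lemma limsup_ge a c : (forall M, eventually_le (proj1_sig a) M -> c <= M) -> c <= limsup a.
Proof. intros H. apply (proj2 (limsup_is_glb a)). auto. Qed.

Lemma limsup_add (a b : bseq_space) : limsup (vadd a b) <= limsup a + limsup b.
Proof.
  assert (K : forall M1, eventually_le (proj1_sig a) M1 -> limsup (vadd a b) - M1 <= limsup b).
  { intros M1 [N1 H1]. apply limsup_ge. intros M2 [N2 H2].
    assert (limsup (vadd a b) <= M1 + M2); [|lra].
    apply limsup_le. exists (max N1 N2).
    intros n Hn. simpl. assert (n >= N1)%nat by lia. assert (n >= N2)%nat by lia.
    specialize (H1 n H). specialize (H2 n H0). lra. }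
  assert (limsup (vadd a b) - limsup b <= limsup a); [|lra].
  apply limsup_ge. intros M HM. specialize (K M HM). lra.
Qed.

Lemma limsup_scal r (a : bseq_space) : 0 <= r -> limsup (vscal r a) = r * limsup a.
Proof.
  intros Hr. destruct (Req_dec r 0) as [->|Hr0].
  - rewrite Rmult_0_l. apply Rle_antisym.
    + apply limsup_le. exists O. intros n _. simpl. lra.
    + apply limsup_ge. intros M [N HN]. specialize (HN N (le_n N)). simpl in HN. lra.
  - apply Rle_antisym.
    + assert (limsup (vscal r a) / r <= limsup a).
      { apply limsup_ge. intros M [N HN]. apply Rdiv_le_of_le_mul; [lra|]. apply limsup_le.
        exists N. intros n Hn. simpl. specialize (HN n Hn). rewrite Rmult_comm.
        apply Rmult_le_compat_r; lra. }
      apply (Rmult_le_compat_l r) in H; [|lra].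
      replace (r * (limsup (vscal r a) / r)) with (limsup (vscal r a)) in H by (field; lra).
      lra.
    + apply limsup_ge. intros M [N HN].
      assert (limsup a <= M / r).
      { apply limsup_le. exists N. intros n Hn. specialize (HN n Hn). simpl in HN.
        apply Rle_div_of_mul_le; lra. }
      apply (Rmult_le_compat_l r) in H; [|lra].
      replace (r * (M / r)) with M in H by (field; lra). lra.
Qed.

Theorem banach_limit : exists L : (nat -> R) -> R,
  (forall u v, bounded_seq u -> bounded_seq v -> L (fun n => u n + v n) = L u + L v) /\
  (forall a u, bounded_seq u -> L (fun n => a * u n) = a * L u) /\
  (forall u B, bounded_seq u -> (forall n, u n <= B) -> L u <= B) /\
  (forall u l, bounded_seq u -> Un_cv u l -> L u = l).
Proof.
  destruct (hahn_banach bseq_space limsup (conj limsup_add limsup_scal)) as [F [Fa [Fs Fle]]].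
  simpl in *.
  pose (L u := match excluded_middle_informative (bounded_seq u) with
               | left H => F (exist _ u H) | right _ => 0 end).
  assert (Leq : forall u (H : bounded_seq u), L u = F (exist _ u H)).
  { intros u H. unfold L. destruct (excluded_middle_informative (bounded_seq u)); [|contradiction].
    apply f_equal, bseq_eq. reflexivity. }
  assert (Ladd : forall u v, bounded_seq u -> bounded_seq v -> L (fun n => u n + v n) = L u + L v).
  { intros u v Hu Hv. rewrite (Leq _ (bounded_seq_add _ _ Hu Hv)), (Leq u Hu), (Leq v Hv).
    rewrite <- Fa. apply f_equal, bseq_eq. reflexivity. }
  assert (Lscal : forall a u, bounded_seq u -> L (fun n => a * u n) = a * L u).
  { intros a u Hu. rewrite (Leq _ (bounded_seq_scal a _ Hu)), (Leq u Hu).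
    rewrite <- Fs. apply f_equal, bseq_eq. reflexivity. }
  assert (Lev : forall u M, bounded_seq u -> eventually_le u M -> L u <= M).
  { intros u M Hu HM. rewrite (Leq u Hu). eapply Rle_trans. apply Fle. apply limsup_le. auto. }
  exists L. split; [|split; [|split]]; auto.
  - intros u B Hu HB. apply Lev; auto. exists O. auto.
  - intros u l Hu Hc. apply Rle_antisym; apply le_epsilon; intros eps He;
      destruct (Hc eps He) as [N HN].
    + apply Lev; auto. exists N. intros n Hn. specialize (HN n Hn).
      apply Rabs_def2 in HN. lra.
    + assert (L (fun n => -1 * u n) <= - l + eps).
      { apply Lev; [apply bounded_seq_scal; auto|]. exists N. intros n Hn. specialize (HN n Hn).
        apply Rabs_def2 in HN. lra. }
      rewrite Lscal in H; auto. lra.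
Qed.

Definition vector_space_of (X : NormedSpace) : VectorSpace :=
  {| vcarrier := X; v0 := zero; vadd := add; vopp := opp; vscal := scal;
     vadd_assoc := add_assoc X; vadd_comm := add_comm X; vadd_zero := add_zero X;
     vadd_opp := add_opp X; vscal_one := scal_one X; vscal_assoc := scal_assoc X;
     vscal_distr_l := scal_distr_l X; vscal_distr_r := scal_distr_r X |}.

Section NormedSpaceTheory.
Variable X : NormedSpace.

Lemma scal0l (x : X) : scal 0 x = zero.
Proof. exact (vscal0l (vector_space_of X) x). Qed.

Lemma add0r (x : X) : add x zero = x.
Proof. exact (vadd0r (vector_space_of X) x). Qed.

Lemma addI (a b c : X) : add a b = add a c -> b = c.
Proof. exact (vaddI (vector_space_of X) a b c). Qed.

Lemma addACA (a b c d : X) : add (add a b) (add c d) = add (add a c) (add b d).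
Proof. exact (vaddACA (vector_space_of X) a b c d). Qed.

Lemma add_scal_m1 (x : X) : add x (scal (-1) x) = zero.
Proof. exact (vadd_scal_m1 (vector_space_of X) x). Qed.

Lemma scal_m1K (x : X) : scal (-1) (scal (-1) x) = x.
Proof. rewrite scal_assoc. replace (-1 * -1) with 1 by ring. apply scal_one. Qed.

Lemma sub_scal_m1 (x y : X) : sub x y = add x (scal (-1) y).
Proof. exact (f_equal (add x) (vopp_scal_m1 (vector_space_of X) y)). Qed.

Lemma sub_eq0 (a b : X) : sub a b = zero -> a = b.
Proof.
  rewrite sub_scal_m1. intros H. apply (addI (scal (-1) b)).
  rewrite (add_comm X _ a), H, add_comm, add_scal_m1. reflexivity.
Qed.

Lemma subDD (a b c d : X) : sub (add a b) (add c d) = add (sub a c) (sub b d).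
Proof. rewrite !sub_scal_m1, scal_distr_l, addACA. reflexivity. Qed.

Lemma sub_scal (a : R) (x y : X) : sub (scal a x) (scal a y) = scal a (sub x y).
Proof. rewrite !sub_scal_m1, scal_distr_l, !scal_assoc, Rmult_comm. reflexivity. Qed.

Lemma norm_zero : norm (@zero X) = 0.
Proof. rewrite <- (scal0l zero), norm_scal, Rabs_R0. ring. Qed.

Lemma norm_scal_m1 (x : X) : norm (scal (-1) x) = norm x.
Proof. rewrite norm_scal, Rabs_m1. ring. Qed.

Lemma norm_ge0 (x : X) : 0 <= norm x.
Proof.
  pose proof (norm_triangle X x (scal (-1) x)) as H.
  rewrite add_scal_m1, norm_zero, norm_scal_m1 in H. lra.
Qed.

Lemma norm_sublinear : @sublinear (vector_space_of X) (@norm X).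
Proof.
  split.
  - intros. apply norm_triangle.
  - intros a x Ha. simpl. rewrite norm_scal, Rabs_pos_eq; auto.
Qed.

Lemma norm_sub_sym (x y : X) : norm (sub x y) = norm (sub y x).
Proof.
  rewrite !sub_scal_m1, <- norm_scal_m1, scal_distr_l, scal_m1K. f_equal. apply add_comm.
Qed.

Lemma norm_sub_scal_m1 (a b : X) : norm (sub (scal (-1) a) b) = norm (sub a (scal (-1) b)).
Proof.
  rewrite <- (norm_scal_m1 (sub a (scal (-1) b))), !sub_scal_m1, scal_distr_l, scal_m1K.
  reflexivity.
Qed.

Lemma norm_sub_ge (x y : X) : Rabs (norm x - norm y) <= norm (sub x y).
Proof.
  assert (Hadd : forall a b : X, a = add (sub a b) b).
  { intros a b. rewrite sub_scal_m1, <- add_assoc, (add_comm X (scal (-1) b) b).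
    rewrite add_scal_m1, add0r. reflexivity. }
  pose proof (norm_triangle X (sub x y) y) as H1. rewrite <- Hadd in H1.
  pose proof (norm_triangle X (sub y x) x) as H2. rewrite <- Hadd, norm_sub_sym in H2.
  apply Rabs_le. lra.
Qed.

Lemma Un_cv_norm (a : nat -> X) z :
  Un_cv (fun n => norm (sub (a n) z)) 0 -> Un_cv (fun n => norm (a n)) (norm z).
Proof. intros H. apply (Un_cv_dominated _ _ _ (fun n => norm_sub_ge (a n) z) H). Qed.

End NormedSpaceTheory.

Definition norming {Y : NormedSpace} (g : Y -> R) (y : Y) :=
  dual_elt g /\ (forall z, Rabs (g z) <= norm z) /\ g y = norm y.

Definition smooth_vector {Y : NormedSpace} (y0 : Y) :=
  forall g1 g2, norming g1 y0 -> norming g2 y0 -> forall z, g1 z = g2 z.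

Lemma norming_of_le_norm {Y : NormedSpace} (F : Y -> R) (y : Y) :
  (forall x z, F (add x z) = F x + F z) -> (forall a x, F (scal a x) = a * F x) ->
  (forall x, F x <= norm x) -> F y = norm y -> norming F y.
Proof.
  intros Fa Fs Fle Fy.
  assert (Fb : forall z, Rabs (F z) <= norm z).
  { intros z. apply Rabs_le. pose proof (Fle (scal (-1) z)) as H.
    rewrite Fs, norm_scal_m1 in H. pose proof (Fle z). lra. }
  split; [|split]; auto. split; [split; auto|]. exists 1. intros x. rewrite Rmult_1_l. auto.
Qed.

Theorem norming_exists (Z : NormedSpace) (z : Z) : exists f, norming f z.
Proof.
  destruct (hahn_banach_tangent (vector_space_of Z) (@norm Z) z (norm_sublinear Z))
    as [F [Fa [Fs [Fle Fz]]]].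
  exists F. apply norming_of_le_norm; auto.
Qed.

Lemma dual_separates (Z : NormedSpace) (z : Z) : (forall f, dual_elt f -> f z = 0) -> z = zero.
Proof.
  intros H. destruct (norming_exists Z z) as [f [Hf [_ Hz]]].
  apply norm_eq_zero. rewrite <- Hz. auto.
Qed.

Lemma dual_elt_bound {Z : NormedSpace} (f : Z -> R) : dual_elt f ->
  exists C, 0 <= C /\ forall x, Rabs (f x) <= C * norm x.
Proof.
  intros [_ [C HC]]. exists (Rabs C). split. apply Rabs_pos. intros x.
  eapply Rle_trans. apply HC. apply Rmult_le_compat_r. apply norm_ge0. apply RRle_abs.
Qed.

Lemma dual_elt_sub {Z : NormedSpace} (f : Z -> R) x y : dual_elt f -> f (sub x y) = f x - f y.
Proof. intros [[Fa Fs] _]. rewrite sub_scal_m1, Fa, Fs. ring. Qed.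

Lemma dual_elt_bounded_seq {X : NormedSpace} (f : X -> R) (v : nat -> X) :
  dual_elt f -> (forall n, norm (v n) <= 1) -> bounded_seq (fun n => f (v n)).
Proof.
  intros Hf Hv. destruct (dual_elt_bound f Hf) as [C [HC0 HC]]. exists C. intros n.
  eapply Rle_trans. apply HC. specialize (Hv n). pose proof (norm_ge0 X (v n)).
  replace C with (C * 1) at 2 by ring. apply Rmult_le_compat_l; lra.
Qed.

Lemma dual_norm_ge {X : NormedSpace} (f : X -> R) x : dual_elt f -> norm x <= 1 ->
  Rabs (f x) <= dual_norm f.
Proof.
  intros Hf Hx. apply sup_R_is_lub; [|exists x; auto]. apply is_lub_exists.
  - exists (Rabs (f x)). exists x; auto.
  - destruct (dual_elt_bound f Hf) as [C [HC0 HC]]. exists C. intros t [y [Hy ->]].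
    eapply Rle_trans. apply HC. replace C with (C * 1) at 2 by ring.
    pose proof (norm_ge0 X y). apply Rmult_le_compat_l; lra.
Qed.

(* A Banach limit of [n |-> f (v n)] is an element of X^{**}; reflexivity
   represents it by a point [w] of the unit ball. *)
Theorem reflexive_cluster_point (X : NormedSpace) (HXR : reflexive X) (v : nat -> X) :
  (forall n, norm (v n) <= 1) -> exists w, norm w <= 1 /\ forall f, dual_elt f ->
   (forall c, (forall n, c <= f (v n)) -> c <= f w) /\
   (forall c, (forall n, f (v n) <= c) -> f w <= c) /\
   (forall l, Un_cv (fun n => f (v n)) l -> f w = l).
Proof.
  intros Hv. destruct banach_limit as [L [Ladd [Lscal [Lle Lcv]]]].
  assert (Lge : forall u c, bounded_seq u -> (forall n, c <= u n) -> c <= L u).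
  { intros u c Hu Hc. assert (L (fun n => -1 * u n) <= - c).
    { apply Lle. apply bounded_seq_scal; auto. intros n. specialize (Hc n). lra. }
    rewrite Lscal in H; auto. lra. }
  assert (Hb : forall f, dual_elt f -> bounded_seq (fun n => f (v n)))
    by (intros; apply dual_elt_bounded_seq; auto).
  destruct (HXR (fun f => L (fun n => f (v n)))) as [w Hw].
  - intros f g Hf Hg. apply Ladd; auto.
  - intros a f Hf. apply Lscal; auto.
  - exists 1. intros f Hf. rewrite Rmult_1_l. apply Rabs_le.
    assert (Hn : forall n, - dual_norm f <= f (v n) <= dual_norm f)
      by (intros n; apply Rabs_le_inv, dual_norm_ge; auto).
    split; [apply Lge | apply Lle]; auto; intros n; apply Hn.
  - exists w. split.
    + destruct (norming_exists X w) as [g [Hg [Hgb Hgw]]]. rewrite <- Hgw, <- Hw by auto.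
      apply Lle; auto. intros n. specialize (Hgb (v n)).
      apply Rabs_le_inv in Hgb. specialize (Hv n). lra.
    + intros f Hf. rewrite <- (Hw f Hf). split; [|split].
      * intros c Hc. apply Lge; auto.
      * intros c Hc. apply Lle; auto.
      * intros l Hl. apply Lcv; auto.
Qed.

Section Operators.
Variables X Y : NormedSpace.

Lemma bounded_linear_zero (A : X -> Y) : bounded_linear A -> A zero = zero.
Proof. intros [[La Ls] _]. rewrite <- (scal0l X zero), Ls, scal0l. reflexivity. Qed.

Lemma bounded_linear_sub (A : X -> Y) x y : bounded_linear A -> A (sub x y) = sub (A x) (A y).
Proof. intros [[La Ls] _]. rewrite !sub_scal_m1, La, Ls. reflexivity. Qed.

Lemma opnorm_is_lub (A : X -> Y) : bounded_linear A ->
  is_lub (fun t => exists x : X, norm x <= 1 /\ t = norm (A x)) (opnorm A).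
Proof.
  intros [_ [C HC]]. apply sup_R_is_lub, is_lub_exists.
  - exists (norm (A zero)). exists zero. rewrite norm_zero. split; auto; lra.
  - exists (Rabs C). intros t [x [Hx ->]]. eapply Rle_trans. apply HC.
    pose proof (norm_ge0 X x). pose proof (Rle_abs C). pose proof (Rabs_pos C). nra.
Qed.

Lemma opnorm_ge (A : X -> Y) x : bounded_linear A -> norm x <= 1 -> norm (A x) <= opnorm A.
Proof. intros HA Hx. apply (proj1 (opnorm_is_lub A HA)). exists x; auto. Qed.

Lemma opnorm_ge0 (A : X -> Y) : bounded_linear A -> 0 <= opnorm A.
Proof.
  intros HA. eapply Rle_trans. apply (norm_ge0 Y (A zero)).
  apply opnorm_ge; auto. rewrite norm_zero; lra.
Qed.

Lemma opnorm_bound (A : X -> Y) x : bounded_linear A -> norm (A x) <= opnorm A * norm x.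
Proof.
  intros HA. destruct (Req_dec (norm x) 0) as [H0|H0].
  - apply norm_eq_zero in H0. subst x. rewrite bounded_linear_zero, !norm_zero by auto. lra.
  - pose proof (norm_ge0 X x). assert (Hp : 0 < norm x) by lra.
    assert (Hi : 0 <= / norm x) by (apply Rlt_le, Rinv_0_lt_compat; auto).
    assert (H1 : norm (A (scal (/ norm x) x)) <= opnorm A).
    { apply opnorm_ge; auto. rewrite norm_scal, Rabs_pos_eq, Rinv_l by lra. lra. }
    destruct HA as [[La Ls] _]. rewrite Ls, norm_scal, Rabs_pos_eq in H1 by auto.
    apply (Rmult_le_compat_l (norm x)) in H1; [|lra].
    rewrite <- Rmult_assoc, Rinv_r, Rmult_1_l in H1 by lra. lra.
Qed.

Lemma opnorm_approx (A : X -> Y) eps : bounded_linear A -> 0 < eps ->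
  exists x, norm x <= 1 /\ opnorm A - eps < norm (A x).
Proof.
  intros HA He. apply NNPP. intros Hn.
  assert (opnorm A <= opnorm A - eps); [|lra].
  apply (proj2 (opnorm_is_lub A HA)). intros t [x [Hx ->]].
  apply Rnot_lt_le. intros Hl. apply Hn. eauto.
Qed.

Lemma opnorm_gt0 (T : X -> Y) : bounded_linear T -> (exists x, T x <> zero) -> 0 < opnorm T.
Proof.
  intros HT [x Hx]. pose proof (opnorm_ge0 T HT). pose proof (opnorm_bound T x HT).
  pose proof (norm_ge0 Y (T x)). pose proof (norm_ge0 X x).
  destruct (Req_dec (norm (T x)) 0) as [E|E]; [apply norm_eq_zero in E; contradiction|].
  destruct (Req_dec (opnorm T) 0) as [E2|E2]; [rewrite E2 in *; lra | lra].
Qed.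

Lemma norm_attainer_unit (T : X -> Y) x : bounded_linear T -> 0 < opnorm T ->
  norm x <= 1 -> norm (T x) = opnorm T -> norm x = 1.
Proof.
  intros HT Hp Hx Ha. pose proof (opnorm_bound T x HT) as H. rewrite Ha in H.
  assert (1 <= norm x); [apply (Rmult_le_reg_l (opnorm T)); auto; lra | lra].
Qed.

Lemma bounded_linear_add (A B : X -> Y) : bounded_linear A -> bounded_linear B ->
  bounded_linear (op_add A B).
Proof.
  intros HA HB.
  assert (bA : forall x, norm (A x) <= opnorm A * norm x) by (intros; apply opnorm_bound; auto).
  assert (bB : forall x, norm (B x) <= opnorm B * norm x) by (intros; apply opnorm_bound; auto).
  destruct HA as [[La Ls] _], HB as [[Lb Lsb] _]. unfold op_add. split; [split|].
  - intros x y. rewrite La, Lb. apply addACA.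
  - intros a x. rewrite Ls, Lsb, scal_distr_l. reflexivity.
  - exists (opnorm A + opnorm B). intros x. eapply Rle_trans. apply norm_triangle.
    rewrite Rmult_plus_distr_r. apply Rplus_le_compat; [apply bA | apply bB].
Qed.

Lemma bounded_linear_scal (A : X -> Y) a : bounded_linear A -> bounded_linear (op_scal a A).
Proof.
  intros HA.
  assert (bA : forall x, norm (A x) <= opnorm A * norm x) by (intros; apply opnorm_bound; auto).
  destruct HA as [[La Ls] HC]. unfold op_scal. split; [split|].
  - intros x y. rewrite La, scal_distr_l. reflexivity.
  - intros b x. rewrite Ls, !scal_assoc, Rmult_comm. reflexivity.
  - exists (Rabs a * opnorm A). intros x. rewrite norm_scal, Rmult_assoc.
    apply Rmult_le_compat_l. apply Rabs_pos. apply bA.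
Qed.

Lemma opnorm_scal (A : X -> Y) a : bounded_linear A -> opnorm (op_scal a A) = Rabs a * opnorm A.
Proof.
  intros HA. pose proof (bounded_linear_scal A a HA) as HaA. apply Rle_antisym.
  - apply (proj2 (opnorm_is_lub _ HaA)). intros t [x [Hx ->]]. unfold op_scal.
    rewrite norm_scal. apply Rmult_le_compat_l. apply Rabs_pos. apply opnorm_ge; auto.
  - destruct (Req_dec a 0) as [->|Ha].
    + rewrite Rabs_R0, Rmult_0_l. apply opnorm_ge0; auto.
    + pose proof (Rabs_pos_lt a Ha).
      assert (opnorm A <= opnorm (op_scal a A) / Rabs a).
      { apply (proj2 (opnorm_is_lub _ HA)). intros t [x [Hx ->]]. apply Rle_div_of_mul_le; auto.
        assert (H0 : norm (scal a (A x)) <= opnorm (op_scal a A)) by exact (opnorm_ge _ x HaA Hx).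
        rewrite norm_scal in H0. lra. }
      apply (Rmult_le_compat_l (Rabs a)) in H0; [|lra].
      replace (Rabs a * (opnorm (op_scal a A) / Rabs a)) with (opnorm (op_scal a A)) in H0
        by (field; lra).
      lra.
Qed.

Definition rank_one (g : X -> R) (y : Y) : X -> Y := fun x => scal (g x) y.

Lemma rank_one_bounded_linear g y : dual_elt g -> bounded_linear (rank_one g y).
Proof.
  intros Hg. pose proof (dual_elt_bound g Hg) as [C [HC0 HC]]. destruct Hg as [[Ga Gs] _].
  unfold rank_one. split; [split|].
  - intros. rewrite Ga, scal_distr_r. reflexivity.
  - intros. rewrite Gs, scal_assoc. reflexivity.
  - exists (C * norm y). intros x. rewrite norm_scal. specialize (HC x).
    pose proof (norm_ge0 Y y).
    replace (C * norm y * norm x) with (C * norm x * norm y) by ring.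
    apply Rmult_le_compat_r; auto.
Qed.

Lemma rank_one_compact g y : dual_elt g -> compact_op (rank_one g y).
Proof.
  intros Hg. split; [apply rank_one_bounded_linear; auto|].
  intros u Hu. pose proof (dual_elt_bound g Hg) as [C [HC0 HC]].
  destruct (Bolzano_Weierstrass (fun n => g (u n)) (fun c => - C <= c <= C) (compact_P3 (- C) C))
    as [l Hl].
  { intros n. apply Rabs_le_inv. eapply Rle_trans. apply HC.
    replace C with (C * 1) at 2 by ring. apply Rmult_le_compat_l; auto. }
  destruct (extract_subsequence (fun k n => Rabs (g (u n) - l) < inv_succ k)) as [phi [Hphi Hp]].
  { intros k N. assert (Hpos : 0 < inv_succ k) by apply inv_succ_pos.
    destruct (Hl (disc l (mkposreal _ Hpos)) N) as [p [Hp1 Hp2]].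
    - exists (mkposreal _ Hpos). intros x Hx. exact Hx.
    - exists p. split; auto. }
  exists phi, (scal l y). split; [exact Hphi|].
  apply (Un_cv_dominated _ (fun n => inv_succ n * norm y)).
  - intros n. unfold rank_one. rewrite Rminus_0_r, Rabs_pos_eq by apply norm_ge0.
    rewrite sub_scal_m1, scal_assoc, <- scal_distr_r, norm_scal.
    replace (g (u (phi n)) + -1 * l) with (g (u (phi n)) - l) by ring.
    apply Rmult_le_compat_r; [apply norm_ge0 | apply Rlt_le, Hp].
  - rewrite <- (Rmult_0_l (norm y)). apply CV_mult; [apply inv_succ_cv|].
    intros eps He. exists O. intros. unfold R_dist. rewrite Rminus_diag, Rabs_R0. auto.
Qed.

Lemma compact_add (A B : X -> Y) : compact_op A -> compact_op B -> compact_op (op_add A B).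
Proof.
  intros [HA CA] [HB CB]. split; [apply bounded_linear_add; auto|].
  intros u Hu. destruct (CA u Hu) as [phi [y1 [Hphi H1]]].
  destruct (CB (fun n => u (phi n)) (fun n => Hu (phi n))) as [psi [y2 [Hpsi H2]]].
  exists (fun n => phi (psi n)), (add y1 y2). split; [apply increasing_comp; auto|].
  apply (Un_cv_dominated _ (fun n => norm (sub (A (u (phi (psi n)))) y1) +
                                     norm (sub (B (u (phi (psi n)))) y2))).
  - intros n. rewrite Rminus_0_r, Rabs_pos_eq by apply norm_ge0. unfold op_add.
    rewrite subDD. apply norm_triangle.
  - apply Un_cv_plus0; auto. apply (Un_cv_subseq (fun n => norm (sub (A (u (phi n))) y1))); auto.
Qed.

Lemma compact_scal (A : X -> Y) a : compact_op A -> compact_op (op_scal a A).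
Proof.
  intros [HA CA]. split; [apply bounded_linear_scal; auto|].
  intros u Hu. destruct (CA u Hu) as [phi [y1 [Hphi H1]]].
  exists phi, (scal a y1). split; [exact Hphi|].
  apply (Un_cv_dominated _ (fun n => Rabs a * norm (sub (A (u (phi n))) y1))).
  - intros n. rewrite Rminus_0_r, Rabs_pos_eq by apply norm_ge0. unfold op_scal.
    rewrite sub_scal, norm_scal. lra.
  - apply Un_cv_scal0; auto.
Qed.

Definition operator_space (S : (X -> Y) -> Prop) := (forall A, S A -> bounded_linear A) /\
  (forall A B, S A -> S B -> S (op_add A B)) /\ (forall a A, S A -> S (op_scal a A)) /\
  (forall g y, dual_elt g -> S (rank_one g y)).

Lemma bounded_operator_space : operator_space (@bounded_linear X Y).
Proof.
  split; [|split; [|split]]; auto.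
  - intros. apply bounded_linear_add; auto.
  - intros. apply bounded_linear_scal; auto.
  - intros. apply rank_one_bounded_linear; auto.
Qed.

Lemma compact_operator_space : operator_space (@compact_op X Y).
Proof.
  split; [|split; [|split]].
  - intros A [H _]; auto.
  - intros. apply compact_add; auto.
  - intros. apply compact_scal; auto.
  - intros. apply rank_one_compact; auto.
Qed.

Lemma dual_elt_comp (g : Y -> R) (T : X -> Y) : dual_elt g -> bounded_linear T ->
  dual_elt (fun x => g (T x)).
Proof.
  intros Hg HT. pose proof (dual_elt_bound g Hg) as [C [HC0 HC]]. destruct Hg as [[Ga Gs] _].
  pose proof HT as [[Ta Ts] _]. split; [split|].
  - intros. rewrite Ta, Ga. reflexivity.
  - intros. rewrite Ts, Gs. reflexivity.
  - exists (C * opnorm T). intros x. eapply Rle_trans. apply HC. rewrite Rmult_assoc.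
    apply Rmult_le_compat_l; auto. apply opnorm_bound; auto.
Qed.

End Operators.

Section SupportFunctionals.
Variables X Y : NormedSpace.
Variable S : (X -> Y) -> Prop.
Hypothesis HS : operator_space X Y S.

Lemma support_functional_le_opnorm T F A : S T -> support_functional S T F -> S A ->
  Rabs (F A) <= opnorm A.
Proof.
  destruct HS as [SB [_ [Sscal _]]].
  intros HT [_ [Fs [[C HC] [Hsup _]]]] HA.
  assert (Hunit : forall B, S B -> opnorm B <= 1 -> Rabs (F B) <= 1).
  { intros B HB HB1. rewrite <- Hsup. apply sup_R_is_lub; [|exists B; auto].
    apply is_lub_exists; [exists (Rabs (F B)), B; auto|].
    exists (Rabs C). intros t [B' [HB' [HB'1 ->]]]. eapply Rle_trans. apply HC; auto.
    pose proof (opnorm_ge0 X Y B' (SB B' HB')). pose proof (Rle_abs C). pose proof (Rabs_pos C).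
    nra. }
  apply le_epsilon. intros eps He.
  pose proof (opnorm_ge0 X Y A (SB A HA)).
  set (c := opnorm A + eps). assert (Hc : 0 < c) by (unfold c; lra).
  assert (Hi : 0 < / c) by (apply Rinv_0_lt_compat; auto).
  pose proof (Hunit (op_scal (/ c) A) (Sscal _ _ HA)) as H1.
  rewrite opnorm_scal, Fs, Rabs_mult, Rabs_pos_eq in H1 by (auto; lra).
  assert (Rabs (F A) <= c); [|unfold c in *; lra].
  apply (Rmult_le_reg_l (/ c)); auto. rewrite Rinv_l by lra. apply H1.
  apply (Rmult_le_reg_l c); auto. rewrite <- Rmult_assoc, Rinv_r by lra. unfold c. lra.
Qed.

Lemma support_functional_perturb T F A t : S T -> support_functional S T F -> S A ->
  opnorm T + t * F A <= opnorm (op_add T (op_scal t A)).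
Proof.
  destruct HS as [_ [Sadd [Sscal _]]]. intros HT HF HA.
  pose proof HF as [Fa [Fs [_ [_ FT]]]].
  rewrite <- FT, <- Fs, <- Fa by auto.
  eapply Rle_trans; [apply Rle_abs | apply (support_functional_le_opnorm T); auto].
Qed.

Lemma eval_support_functional T x1 g : S T -> 0 < opnorm T -> norm x1 <= 1 ->
  norm (T x1) = opnorm T -> norming g (T x1) -> support_functional S T (fun A => g (A x1)).
Proof.
  destruct HS as [SB [_ [Sscal _]]].
  intros HT HTp Hx1 Hatt [[[Ga Gs] _] [Hgb HgT]].
  assert (Bd : forall A, S A -> Rabs (g (A x1)) <= opnorm A).
  { intros A HA. eapply Rle_trans. apply Hgb. eapply Rle_trans. apply opnorm_bound; auto.
    pose proof (opnorm_ge0 X Y A (SB A HA)). pose proof (norm_ge0 X x1). nra. }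
  split; [|split; [|split; [|split]]].
  - intros A B _ _. apply Ga.
  - intros a A _. apply Gs.
  - exists 1. intros A HA. rewrite Rmult_1_l. auto.
  - assert (Hl : is_lub (fun t => exists A, S A /\ opnorm A <= 1 /\ t = Rabs (g (A x1))) 1).
    { split.
      - intros t [A [HA [H1 ->]]]. eapply Rle_trans; [apply Bd; auto | auto].
      - intros b Hb. apply Hb. exists (op_scal (/ opnorm T) T).
        assert (Hi : 0 <= / opnorm T) by (apply Rlt_le, Rinv_0_lt_compat; auto).
        split; [auto|split].
        + rewrite opnorm_scal, Rabs_pos_eq, Rinv_l by (auto; lra). lra.
        + unfold op_scal. rewrite Gs, HgT, Hatt, Rinv_l, Rabs_R1; lra. }
    exact (is_lub_unique _ _ _ (sup_R_is_lub _ (ex_intro _ 1 Hl)) Hl).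
  - rewrite HgT. auto.
Qed.

End SupportFunctionals.

Section NormAttainment.
Variables X Y : NormedSpace.
Hypothesis HXR : reflexive X.

Lemma reflexive_cluster_point_image (T : X -> Y) (v : nat -> X) z : bounded_linear T ->
  (forall n, norm (v n) <= 1) -> Un_cv (fun n => norm (sub (T (v n)) z)) 0 ->
  exists w, norm w <= 1 /\ T w = z /\ forall f, dual_elt f ->
   (forall c, (forall n, c <= f (v n)) -> c <= f w) /\
   (forall c, (forall n, f (v n) <= c) -> f w <= c).
Proof.
  intros HT Hv Hc. destruct (reflexive_cluster_point X HXR v Hv) as [w [Hw Hf]].
  exists w. split; [auto|split].
  - apply sub_eq0, dual_separates. intros g Hg.
    rewrite dual_elt_sub by auto. apply Rminus_diag_eq.
    destruct (Hf _ (dual_elt_comp X Y g T Hg HT)) as [_ [_ Hl]]. apply Hl.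
    destruct (dual_elt_bound g Hg) as [C [HC0 HC]].
    apply (Un_cv_dominated _ (fun n => C * norm (sub (T (v n)) z))).
    + intros n. rewrite <- dual_elt_sub by auto. apply HC.
    + apply Un_cv_scal0; auto.
  - intros f Hff. destruct (Hf f Hff) as [A [B _]]. split; auto.
Qed.

Lemma compact_attains_norm (T : X -> Y) : compact_op T ->
  exists x0, norm x0 <= 1 /\ norm (T x0) = opnorm T.
Proof.
  intros [HT CT].
  destruct (seq_choice (fun n x => norm x <= 1 /\ opnorm T - inv_succ n < norm (T x))) as [x Hx].
  { intros n. apply opnorm_approx; auto. apply inv_succ_pos. }
  destruct (CT x (fun n => proj1 (Hx n))) as [phi [z [Hphi Hz]]].
  destruct (reflexive_cluster_point_image T (fun n => x (phi n)) z HT (fun n => proj1 (Hx (phi n))) Hz)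
    as [w [Hw [HTw _]]].
  exists w. split; auto. rewrite HTw.
  apply (UL_sequence (fun n => norm (T (x (phi n))))); [apply Un_cv_norm; auto|].
  apply (Un_cv_subseq (fun n => norm (T (x n)))); auto.
  apply (Un_cv_dominated _ inv_succ); [|apply inv_succ_cv].
  intros n. destruct (Hx n) as [H1 H2]. pose proof (opnorm_ge X Y T (x n) HT H1).
  rewrite Rabs_left1 by lra. lra.
Qed.

End NormAttainment.

(** * Smooth operators attain their norm at an essentially unique point *)

Definition smooth_attainment {X Y : NormedSpace} (T : X -> Y) :=
  exists x0, norm x0 <= 1 /\ norm (T x0) = opnorm T /\
  (forall x, norm x <= 1 -> norm (T x) = opnorm T -> x = x0 \/ x = scal (-1) x0) /\
  smooth_vector (T x0).

Section SmoothImpliesAttainment.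
Variables X Y : NormedSpace.
Variable S : (X -> Y) -> Prop.
Hypothesis HS : operator_space X Y S.
Variable T : X -> Y.
Hypothesis HsmT : smooth_in S T.

Let HT : bounded_linear T := proj1 HS T (proj1 HsmT).
Let Hp : 0 < opnorm T := opnorm_gt0 X Y T HT (proj1 (proj2 HsmT)).

(* Uniqueness of the support functional, tested on the rank-one operators [h (.) y]. *)
Lemma smooth_eval_eq x0 x1 g0 g1 : norm x0 <= 1 -> norm (T x0) = opnorm T ->
  norm x1 <= 1 -> norm (T x1) = opnorm T -> norming g0 (T x0) -> norming g1 (T x1) ->
  forall h y, dual_elt h -> h x0 * g0 y = h x1 * g1 y.
Proof.
  intros Hx0 Hatt0 Hx1 Hatt1 Hg0 Hg1 h y Hh.
  pose proof HsmT as [HST [_ [_ Huniq]]]. pose proof HS as [_ [_ [_ SR]]].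
  pose proof (Huniq _ _ (eval_support_functional X Y S HS T x0 g0 HST Hp Hx0 Hatt0 Hg0)
                        (eval_support_functional X Y S HS T x1 g1 HST Hp Hx1 Hatt1 Hg1)
                        (rank_one X Y h y) (SR h y Hh)) as E.
  destruct Hg0 as [[[_ G0s] _] _], Hg1 as [[[_ G1s] _] _].
  unfold rank_one in E. rewrite G0s, G1s in E. exact E.
Qed.

Lemma smooth_attainer_pm x0 x1 : norm x0 <= 1 -> norm (T x0) = opnorm T ->
  norm x1 <= 1 -> norm (T x1) = opnorm T -> x1 = x0 \/ x1 = scal (-1) x0.
Proof.
  intros Hx0 Hatt0 Hx1 Hatt1.
  destruct (norming_exists Y (T x0)) as [g0 Hg0]. destruct (norming_exists Y (T x1)) as [g1 Hg1].
  pose proof (smooth_eval_eq x0 x1 g0 g1 Hx0 Hatt0 Hx1 Hatt1 Hg0 Hg1) as E.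
  set (lam := g1 (T x0) / opnorm T).
  assert (Ex : x0 = scal lam x1).
  { apply sub_eq0, dual_separates. intros h Hh. rewrite dual_elt_sub by auto.
    pose proof Hh as [[_ Hs] _]. rewrite Hs. specialize (E h (T x0) Hh).
    destruct Hg0 as [_ [_ Hg0x]]. rewrite Hg0x, Hatt0 in E.
    assert (h x0 = lam * h x1); [|lra].
    unfold lam. apply (Rmult_eq_reg_r (opnorm T)); [rewrite E; field|]; lra. }
  pose proof (norm_attainer_unit X Y T x0 HT Hp Hx0 Hatt0) as N0.
  pose proof (norm_attainer_unit X Y T x1 HT Hp Hx1 Hatt1) as N1.
  rewrite Ex, norm_scal, N1 in N0.
  assert (Hl : lam = 1 \/ lam = -1) by (revert N0; unfold Rabs; destruct (Rcase_abs lam); lra).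
  destruct Hl as [Hl|Hl]; rewrite Hl in Ex; subst x0.
  - left. rewrite scal_one. reflexivity.
  - right. rewrite scal_m1K. reflexivity.
Qed.

Lemma smooth_attainer_image_smooth x0 : norm x0 <= 1 -> norm (T x0) = opnorm T ->
  smooth_vector (T x0).
Proof.
  intros Hx0 Hatt0 g1 g2 Hg1 Hg2 y.
  destruct (norming_exists X x0) as [h [Hh [_ Hhx]]].
  pose proof (smooth_eval_eq x0 x0 g1 g2 Hx0 Hatt0 Hx0 Hatt0 Hg1 Hg2 h y Hh) as E.
  rewrite Hhx, (norm_attainer_unit X Y T x0 HT Hp Hx0 Hatt0) in E. lra.
Qed.

Lemma smooth_attainment_of_smooth : reflexive X -> compact_op T -> smooth_attainment T.
Proof.
  intros HXR HTc. destruct (compact_attains_norm X Y HXR T HTc) as [x0 [Hx0 Hatt0]].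
  exists x0. split; [|split; [|split]]; auto.
  - intros x Hx Hatt. apply smooth_attainer_pm; auto.
  - apply smooth_attainer_image_smooth; auto.
Qed.

End SmoothImpliesAttainment.

(** * Maximizing sequences of a compact operator on a Kadets–Klee space *)

Lemma weak_cv_of_unique_preimage (X Y : NormedSpace) (HXR : reflexive X) (T : X -> Y)
  (v : nat -> X) z w0 : bounded_linear T -> (forall n, norm (v n) <= 1) ->
  Un_cv (fun n => norm (sub (T (v n)) z)) 0 ->
  (forall w, norm w <= 1 -> T w = z -> w = w0) -> weak_cv v w0.
Proof.
  intros HT Hv Hz Huniq f Hf.
  assert (Hsub : forall psi, increasing psi ->
    (forall c, (forall n, c <= f (v (psi n))) -> c <= f w0) /\
    (forall c, (forall n, f (v (psi n)) <= c) -> f w0 <= c)).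
  { intros psi Hpsi.
    destruct (reflexive_cluster_point_image X Y HXR T (fun n => v (psi n)) z HT (fun n => Hv (psi n)))
      as [w [Hw [HTw Hc]]]; [apply (Un_cv_subseq (fun n => norm (sub (T (v n)) z))); auto|].
    rewrite <- (Huniq w Hw HTw). apply Hc; auto. }
  apply NNPP. intros Hn. destruct (not_Un_cv_frequently _ _ Hn) as [eps [He HN]].
  destruct (frequently_above_or_below _ _ _ HN) as [H1|H1].
  - destruct (extract_subsequence (fun _ n => f w0 + eps <= f (v n))) as [psi [Hpsi Hps]];
      [intros _ N; apply H1|].
    pose proof (proj1 (Hsub psi Hpsi) _ Hps). lra.
  - destruct (extract_subsequence (fun _ n => f (v n) <= f w0 - eps)) as [psi [Hpsi Hps]];
      [intros _ N; apply H1|].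
    pose proof (proj2 (Hsub psi Hpsi) _ Hps). lra.
Qed.

Lemma norm_cv1_of_maximizing (X Y : NormedSpace) (T : X -> Y) (v : nat -> X) :
  bounded_linear T -> 0 < opnorm T -> (forall n, norm (v n) <= 1) ->
  Un_cv (fun n => norm (T (v n))) (opnorm T) -> Un_cv (fun n => norm (v n)) 1.
Proof.
  intros HT Hp Hv Hcv.
  apply (Un_cv_dominated _ (fun n => / opnorm T * Rabs (norm (T (v n)) - opnorm T))).
  - intros n. pose proof (opnorm_bound X Y T (v n) HT). specialize (Hv n).
    pose proof (opnorm_ge X Y T (v n) HT Hv).
    rewrite !Rabs_left1 by lra. apply (Rmult_le_reg_l (opnorm T)); auto.
    rewrite <- Rmult_assoc, Rinv_r, Rmult_1_l by lra. nra.
  - apply Un_cv_scal0, Un_cv_dist0. auto.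
Qed.

Section MaximizingSequences.
Variables X Y : NormedSpace.
Hypothesis HXR : reflexive X.
Hypothesis HXK : kadets_klee X.
Variable T : X -> Y.
Hypothesis HTc : compact_op T.
Variable x0 : X.
Hypothesis Huniq0 : forall x, norm x <= 1 -> norm (T x) = opnorm T -> x = x0 \/ x = scal (-1) x0.
Hypothesis Hp : 0 < opnorm T.

Let HT : bounded_linear T := proj1 HTc.

Lemma attained_preimage_unique z w w' : norm z = opnorm T -> norm w <= 1 -> norm w' <= 1 ->
  T w = z -> T w' = z -> w = w'.
Proof.
  intros Hz Hw Hw' HTw HTw'.
  assert (Hpm : forall a, T a = z -> T (scal (-1) a) = z -> False).
  { intros a Ha Hma. destruct HT as [[_ Ts] _]. rewrite Ts, Ha in Hma.
    assert (E : norm (add z z) = 0).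
    { rewrite <- Hma at 2. rewrite add_scal_m1. apply norm_zero. }
    replace (add z z) with (scal 2 z) in E by (rewrite <- (scal_one Y z) at 2 3;
      rewrite <- scal_distr_r; f_equal; ring).
    rewrite norm_scal, Rabs_pos_eq in E; lra. }
  assert (Hatt : forall a, norm a <= 1 -> T a = z -> a = x0 \/ a = scal (-1) x0)
    by (intros a Ha HTa; apply Huniq0; [|rewrite HTa]; auto).
  destruct (Hatt w Hw HTw) as [-> | ->], (Hatt w' Hw' HTw') as [-> | ->]; auto.
  - exfalso. apply (Hpm x0); auto.
  - exfalso. apply (Hpm (scal (-1) x0)); [|rewrite scal_m1K]; auto.
Qed.

Lemma maximizing_subseq_cv (x : nat -> X) : (forall n, norm (x n) <= 1) ->
  Un_cv (fun n => norm (T (x n))) (opnorm T) ->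
  exists phi (w : nat -> X), increasing phi /\
    (forall k, w k = x (phi k) \/ w k = scal (-1) (x (phi k))) /\
    Un_cv (fun k => norm (sub (w k) x0)) 0.
Proof.
  intros Hx Hcv. destruct (proj2 HTc x Hx) as [phi [z [Hphi Hz]]].
  set (v n := x (phi n)).
  assert (Hv : forall n, norm (v n) <= 1) by (intros; apply Hx).
  assert (Hcvv : Un_cv (fun n => norm (T (v n))) (opnorm T))
    by (apply (Un_cv_subseq (fun n => norm (T (x n)))); auto).
  assert (Hnz : norm z = opnorm T)
    by (apply (UL_sequence (fun n => norm (T (v n)))); auto; apply Un_cv_norm; auto).
  destruct (reflexive_cluster_point_image X Y HXR T v z HT Hv Hz) as [w0 [Hw0 [HTw0 _]]].
  assert (Hweak : weak_cv v w0).
  { apply (weak_cv_of_unique_preimage X Y HXR T v z); auto.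
    intros w Hw HTw. apply (attained_preimage_unique z); auto. }
  assert (Hstrong : Un_cv (fun n => norm (sub (v n) w0)) 0).
  { apply HXK; auto.
    replace (norm w0) with 1; [apply (norm_cv1_of_maximizing X Y T); auto|].
    symmetry. apply (norm_attainer_unit X Y T w0 HT Hp Hw0). rewrite HTw0. auto. }
  assert (Hatt : norm (T w0) = opnorm T) by (rewrite HTw0; auto).
  destruct (Huniq0 w0 Hw0 Hatt) as [E|E].
  - exists phi, v. subst w0. split; [exact Hphi|split; auto].
  - exists phi, (fun k => scal (-1) (v k)). split; [exact Hphi|split; auto].
    apply (Un_cv_ext (fun n => norm (sub (v n) w0))); auto.
    intros n. rewrite norm_sub_scal_m1, <- E. reflexivity.
Qed.

End MaximizingSequences.

(** * Smooth norm attainment implies smoothness *)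

Definition dnorm {Y : NormedSpace} (y0 u : Y) : R := dderiv (vector_space_of Y) (@norm Y) y0 u.

Lemma smooth_dnorm_odd {Y : NormedSpace} (y0 : Y) : smooth_vector y0 ->
  forall u, dnorm y0 (scal (-1) u) = - dnorm y0 u.
Proof.
  intros Hs u.
  pose proof (dderiv_sublinear _ _ (norm_sublinear Y) y0) as Dsub.
  assert (Hnorming : forall F : Y -> R, (forall x z, F (add x z) = F x + F z) ->
      (forall a x, F (scal a x) = a * F x) -> (forall x, F x <= dnorm y0 x) -> norming F y0).
  { intros F Fa Fs Fle.
    destruct (dominated_by_dderiv_tangent _ _ (norm_sublinear Y) y0 F Fs Fle).
    apply norming_of_le_norm; auto. }
  destruct (hahn_banach_tangent (vector_space_of Y) (dnorm y0) u Dsub)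
    as [F1 [F1a [F1s [F1le F1u]]]].
  destruct (hahn_banach_tangent (vector_space_of Y) (dnorm y0) (scal (-1) u) Dsub)
    as [F2 [F2a [F2s [F2le F2u]]]].
  simpl in *.
  pose proof (Hs F1 F2 (Hnorming F1 F1a F1s F1le) (Hnorming F2 F2a F2s F2le)) as E.
  rewrite <- F2u, F2s, <- E, F1u. ring.
Qed.

Lemma norming_le_dquot {Y : NormedSpace} (g : Y -> R) (v y u : Y) s : norming g v -> 0 < s ->
  g u <= (norm (add y (scal s u)) - norm y) / s + 2 / s * norm (sub v y).
Proof.
  intros [[[Ga Gs] _] [Hgb Hgv]] Hs.
  assert (G1 : g y + s * g u <= norm (add y (scal s u))).
  { rewrite <- Gs, <- Ga. eapply Rle_trans; [apply Rle_abs | apply Hgb]. }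
  assert (G2 : norm y - 2 * norm (sub v y) <= g y).
  { pose proof (Rabs_le_inv _ _ (Hgb (sub v y))). pose proof (Rabs_le_inv _ _ (norm_sub_ge Y v y)).
    assert (g (sub v y) = g v - g y) by (rewrite sub_scal_m1, Ga, Gs; ring). lra. }
  replace ((norm (add y (scal s u)) - norm y) / s + 2 / s * norm (sub v y))
    with ((norm (add y (scal s u)) - norm y + 2 * norm (sub v y)) / s) by (field; lra).
  apply Rle_div_of_mul_le; lra.
Qed.

(* [c] plays the slope of [t |-> ||T + t A||] at [0]: if [w] nearly attains
   [||T + t A||], then [c] is bounded by the difference quotient of the norm of [Y]
   at [T x0] in the direction [A x0], up to errors vanishing with [t] and [||w - x0||]. *)
Lemma perturbed_attainment_estimate (X Y : NormedSpace) (T A : X -> Y) x0 w t s c :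
  bounded_linear T -> bounded_linear A -> 0 < t -> 0 < s -> norm w <= 1 ->
  opnorm T + t * c <= norm (op_add T (op_scal t A) w) + t * t ->
  c <= (norm (add (T x0) (scal s (A x0))) - norm (T x0)) / s + opnorm A * norm (sub w x0) + t
       + 2 / s * (opnorm T * norm (sub w x0) + t * norm (A x0)).
Proof.
  intros HT HA Ht Hs Hw Hgap.
  set (v := add (T w) (scal t (A x0))).
  destruct (norming_exists Y v) as [g Hg]. pose proof Hg as [[[Ga Gs] _] [Hgb Hgv]].
  assert (Hpert : norm (op_add T (op_scal t A) w) <= norm v + t * (opnorm A * norm (sub w x0))).
  { assert (E : op_add T (op_scal t A) w = add v (scal t (sub (A w) (A x0)))).
    { unfold op_add, op_scal, v. rewrite sub_scal_m1, scal_distr_l, scal_assoc, <- add_assoc.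
      f_equal. rewrite (add_comm Y (scal t (A w))), add_assoc, <- scal_distr_r.
      replace (t + t * -1) with 0 by ring. rewrite scal0l, add_zero. reflexivity. }
    rewrite E. eapply Rle_trans; [apply norm_triangle|]. apply Rplus_le_compat_l.
    rewrite norm_scal, Rabs_pos_eq, <- bounded_linear_sub by (auto; lra).
    apply Rmult_le_compat_l; [lra | apply opnorm_bound; auto]. }
  assert (Hv : norm v <= opnorm T + t * g (A x0)).
  { rewrite <- Hgv. unfold v. rewrite Ga, Gs. apply Rplus_le_compat_r.
    eapply Rle_trans; [apply Rle_abs|]. eapply Rle_trans; [apply Hgb|]. apply opnorm_ge; auto. }
  assert (Hslope : c <= g (A x0) + opnorm A * norm (sub w x0) + t)
    by (apply (Rmult_le_reg_l t); nra).
  assert (Hdist : norm (sub v (T x0)) <= opnorm T * norm (sub w x0) + t * norm (A x0)).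
  { assert (E : sub v (T x0) = add (sub (T w) (T x0)) (scal t (A x0))).
    { unfold v. rewrite !sub_scal_m1, <- !add_assoc. f_equal. apply add_comm. }
    rewrite E. eapply Rle_trans; [apply norm_triangle|].
    rewrite norm_scal, Rabs_pos_eq, <- bounded_linear_sub by (auto; lra).
    apply Rplus_le_compat_r, opnorm_bound; auto. }
  pose proof (norming_le_dquot g v (T x0) (A x0) s Hg Hs).
  assert (2 / s * norm (sub v (T x0)) <= 2 / s * (opnorm T * norm (sub w x0) + t * norm (A x0)))
    by (apply Rmult_le_compat_l; [apply Rlt_le, Rdiv_lt_0_compat|]; lra).
  lra.
Qed.

Section SmoothAttainmentImpliesSmooth.
Variables X Y : NormedSpace.
Hypothesis HXR : reflexive X.
Hypothesis HXK : kadets_klee X.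
Variable S : (X -> Y) -> Prop.
Hypothesis HS : operator_space X Y S.
Variable T : X -> Y.
Hypothesis HTc : compact_op T.
Hypothesis HST : S T.
Variable x0 : X.
Hypothesis Huniq0 : forall x, norm x <= 1 -> norm (T x) = opnorm T -> x = x0 \/ x = scal (-1) x0.
Hypothesis Hp : 0 < opnorm T.

Let HT : bounded_linear T := proj1 HTc.

Lemma perturbation_maximizing_seq F A : support_functional S T F -> S A ->
  exists x : nat -> X, (forall n, norm (x n) <= 1 /\
    opnorm T + inv_succ n * F A <= norm (op_add T (op_scal (inv_succ n) A) (x n)) + inv_succ n * inv_succ n) /\
    Un_cv (fun n => norm (T (x n))) (opnorm T).
Proof.
  intros HF HA. pose proof HS as [SB [Sadd [Sscal _]]].
  set (B n := op_add T (op_scal (inv_succ n) A)).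
  destruct (seq_choice (fun n x => norm x <= 1 /\
                         opnorm (B n) - inv_succ n * inv_succ n < norm (B n x))) as [x Hx].
  { intros n. apply opnorm_approx; [apply SB, Sadd; auto|]. pose proof (inv_succ_pos n). nra. }
  assert (Hgap : forall n, opnorm T + inv_succ n * F A <= norm (B n (x n)) + inv_succ n * inv_succ n).
  { intros n. pose proof (support_functional_perturb X Y S HS T F A (inv_succ n) HST HF HA).
    destruct (Hx n). fold (B n) in *. lra. }
  exists x. split; [intros n; split; [apply Hx | apply Hgap]|].
  apply (Un_cv_dominated _ (fun n => (Rabs (F A) + 1 + opnorm A) * inv_succ n));
    [|apply Un_cv_scal0, inv_succ_cv].
  intros n. destruct (Hx n) as [Hx1 _]. specialize (Hgap n).
  pose proof (opnorm_ge X Y T (x n) HT Hx1).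
  assert (norm (B n (x n)) <= norm (T (x n)) + inv_succ n * opnorm A).
  { unfold B, op_add, op_scal. eapply Rle_trans; [apply norm_triangle|].
    rewrite norm_scal, Rabs_pos_eq by (apply Rlt_le, inv_succ_pos).
    apply Rplus_le_compat_l, Rmult_le_compat_l; [apply Rlt_le, inv_succ_pos|].
    apply opnorm_ge; auto. }
  pose proof (inv_succ_pos n). pose proof (inv_succ_le1 n). pose proof (Rle_abs (- F A)).
  rewrite Rabs_Ropp in *. rewrite Rabs_left1 by lra. nra.
Qed.

Lemma support_functional_near_attainers F A : support_functional S T F -> S A ->
  forall eta, 0 < eta -> exists t w, 0 < t < eta /\ norm w <= 1 /\ norm (sub w x0) < eta /\
    opnorm T + t * F A <= norm (op_add T (op_scal t A) w) + t * t.
Proof.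
  intros HF HA eta Heta. pose proof HS as [SB [Sadd [Sscal _]]].
  destruct (perturbation_maximizing_seq F A HF HA) as [x [Hx Hcv]].
  destruct (maximizing_subseq_cv X Y HXR HXK T HTc x0 Huniq0 Hp x (fun n => proj1 (Hx n)) Hcv)
    as [phi [w [Hphi [Hw Hwcv]]]].
  destruct (Hwcv eta Heta) as [N1 HN1]. destruct (inv_succ_small eta Heta) as [N2 HN2].
  set (k := max N1 N2). set (B := op_add T (op_scal (inv_succ (phi k)) A)).
  assert (Hnw : norm (w k) = norm (x (phi k)) /\ norm (B (w k)) = norm (B (x (phi k)))).
  { destruct (Hw k) as [-> | ->]; [auto|].
    assert (HB : bounded_linear B) by (apply SB, Sadd; auto). destruct HB as [[_ Bs] _].
    rewrite Bs, !norm_scal_m1. auto. }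
  exists (inv_succ (phi k)), (w k). split; [split|split; [|split]].
  - apply inv_succ_pos.
  - eapply Rle_lt_trans; [apply inv_succ_decr, (increasing_ge phi Hphi k)|].
    apply HN2. unfold k. lia.
  - rewrite (proj1 Hnw). apply Hx.
  - specialize (HN1 k ltac:(unfold k; lia)). unfold R_dist in HN1.
    rewrite Rminus_0_r, Rabs_pos_eq in HN1 by apply norm_ge0. exact HN1.
  - fold B. rewrite (proj2 Hnw). apply Hx.
Qed.

Lemma support_functional_le_dnorm F A : support_functional S T F -> S A ->
  F A <= dnorm (T x0) (A x0).
Proof.
  intros HF HA. pose proof HS as [SB _].
  apply (dderiv_ge _ _ (norm_sublinear Y)). intros s Hs. unfold dquot. simpl.
  set (K := 2 / s * (opnorm T + norm (A x0)) + opnorm A + 1).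
  assert (HK : 0 < K).
  { pose proof (norm_ge0 Y (A x0)). pose proof (opnorm_ge0 X Y A (SB A HA)).
    assert (0 <= 2 / s * (opnorm T + norm (A x0)))
      by (apply Rmult_le_pos; [apply Rlt_le, Rdiv_lt_0_compat|]; lra).
    unfold K. lra. }
  apply le_epsilon. intros eps He.
  set (eta := Rmin 1 (eps / K)).
  assert (Heta : 0 < eta) by (apply Rmin_glb_lt; [lra | apply Rdiv_lt_0_compat; lra]).
  assert (HetaK : eta * K <= eps).
  { apply Rle_trans with (eps / K * K); [apply Rmult_le_compat_r; [lra | apply Rmin_r]|].
    right. field. lra. }
  destruct (support_functional_near_attainers F A HF HA eta Heta)
    as (t & w & [Ht Hteta] & Hw & Hd & Hgap).
  pose proof (perturbed_attainment_estimate X Y T A x0 w t s (F A) HT (SB A HA) Ht Hs Hw Hgap).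
  pose proof (norm_ge0 X (sub w x0)). pose proof (norm_ge0 Y (A x0)).
  pose proof (opnorm_ge0 X Y A (SB A HA)).
  assert (2 / s * (opnorm T * norm (sub w x0) + t * norm (A x0))
          <= 2 / s * (opnorm T * eta + eta * norm (A x0))).
  { apply Rmult_le_compat_l; [apply Rlt_le, Rdiv_lt_0_compat; lra|]. nra. }
  assert (opnorm A * norm (sub w x0) <= opnorm A * eta) by nra.
  assert (2 / s * (opnorm T * eta + eta * norm (A x0)) + opnorm A * eta + eta = eta * K)
    by (unfold K; ring).
  lra.
Qed.

End SmoothAttainmentImpliesSmooth.

(* The support functional is forced to be [A |-> D(T x0; A x0)], linear in [A]
   because the norm derivative at the smooth point [T x0] is odd. *)
Theorem smooth_of_smooth_attainment (X Y : NormedSpace) (HXR : reflexive X)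
  (HXK : kadets_klee X) (S : (X -> Y) -> Prop) (HS : operator_space X Y S) (T : X -> Y) :
  compact_op T -> S T -> (exists x, T x <> zero) -> smooth_attainment T -> smooth_in S T.
Proof.
  intros HTc HST Hnz (x0 & Hx0 & Hatt0 & Huniq0 & Hsm).
  pose proof HS as [SB [_ [Sscal _]]].
  assert (Hp : 0 < opnorm T) by (apply opnorm_gt0; auto).
  assert (Det : forall F A, support_functional S T F -> S A -> F A = dnorm (T x0) (A x0)).
  { intros F A HF HA. pose proof HF as [_ [Fs _]]. apply Rle_antisym.
    - apply (support_functional_le_dnorm X Y HXR HXK S HS T HTc HST x0 Huniq0 Hp); auto.
    - pose proof (support_functional_le_dnorm X Y HXR HXK S HS T HTc HST x0 Huniq0 Hp F
                    (op_scal (-1) A) HF (Sscal _ _ HA)) as H.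
      unfold op_scal at 2 in H. rewrite (smooth_dnorm_odd (T x0) Hsm), Fs in H by auto. lra. }
  split; [|split; [|split]]; auto.
  - destruct (norming_exists Y (T x0)) as [g Hg].
    exists (fun A => g (A x0)). apply eval_support_functional; auto.
  - intros f g Hf Hg A HA. rewrite (Det f A Hf HA), (Det g A Hg HA). reflexivity.
Qed.

Theorem theorem3p5 (X Y : NormedSpace)
  (HXB : banach X) (HXR : reflexive X) (HXK : kadets_klee X)
  (T : X -> Y) (HT : compact_op T) :
  smooth_in (@bounded_linear X Y) T <-> smooth_in (@compact_op X Y) T.
Proof.
  split; intros Hsm; pose proof (proj1 (proj2 Hsm)) as Hnz.
  - apply (smooth_of_smooth_attainment X Y HXR HXK _ (compact_operator_space X Y)); auto.
    exact (smooth_attainment_of_smooth X Y _ (bounded_operator_space X Y) T Hsm HXR HT).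
  - apply (smooth_of_smooth_attainment X Y HXR HXK _ (bounded_operator_space X Y));
      [exact HT | exact (proj1 HT) | exact Hnz |].
    exact (smooth_attainment_of_smooth X Y _ (compact_operator_space X Y) T Hsm HXR HT).
Qed.
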